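(* Let $d\ge 1$ and let $p(x,y)$ be a nonzero real binary form of degree $d$ having exactly $\tau$ real linear factors, counted with multiplicity. Suppose $$p(x,y)=\sum_{k=1}^r \lambda_k(\cos\theta_k\, x-\sin\theta_k\, y)^d,$$ where $r\ge 2$, $-\tfrac{\pi}{2}<\theta_1<\theta_2<\dots<\theta_r\le\tfrac{\pi}{2}$, and all $\lambda_k$ are nonzero real numbers. Let $\sigma$ be the number of sign changes in the sequence $(\lambda_1,\lambda_2,\dots,\lambda_r,(-1)^d\lambda_1)$. Then $\tau\le\sigma$. *)

From Stdlib Require Import Reals Lra List.
Open Scope R_scope.

Definition binform (d : nat) (a : nat -> R) (x y : R) : R :=
  sum_f_R0 (fun i => a i * x ^ i * y ^ (d - i)) d.

Definition binform_nonzero (d : nat) (a : nat -> R) : Prop :=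
  exists i, (i <= d)%nat /\ a i <> 0.

Fixpoint prod_lin (m : nat) (u v : nat -> R) (x y : R) : R :=
  match m with
  | O => 1
  | S k => prod_lin k u v x y * (u k * x + v k * y)
  end.

Definition has_real_linear_factors (d : nat) (a : nat -> R) (m : nat) : Prop :=
  (m <= d)%nat /\
  exists (u v b : nat -> R),
    (forall i, (i < m)%nat -> u i <> 0 \/ v i <> 0) /\
    forall x y, binform d a x y = prod_lin m u v x y * binform (d - m) b x y.

Definition num_real_linear_factors (d : nat) (a : nat -> R) (tau : nat) : Prop :=
  has_real_linear_factors d a tau /\
  forall m, has_real_linear_factors d a m -> (m <= tau)%nat.

Fixpoint sign_changes_aux (l : list R) : nat :=
  match l with
  | a :: ((b :: _) as t) =>
      ((if Rlt_dec (a * b) 0 then 1 else 0) + sign_changes_aux t)%nat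
  | _ => O
  end.

Definition sign_changes (l : list R) : nat :=
  sign_changes_aux (filter (fun z => if Req_EM_T z 0 then false else true) l).

(* Each real linear factor contributes one unit of multiplicity to a real
   projective zero of p, so it suffices to bound the total multiplicity of a
   list of distinct zeros by sigma.  This is done by induction on r:
   - if d = 0 or sigma = 0, p has no nontrivial zero (it is a nonzero
     constant, resp. a definite form of even degree);
   - for r = 2 the zeros are simple and determined by the d-th power of the
     ratio of the two linear forms, so there are at most sigma of them;
   - otherwise some term la_k adjacent to a sign change has a nonvanishing
     "killing" derivative D_k p along (sin th_k, cos th_k).  D_k p is a sum of
     r - 1 powers with at least one sign change fewer, and by Rolle's theorem
     it keeps all the zeros of p up to one unit of total multiplicity. *)

From Stdlib Require Import Reals Lra Lia List Classical.
Open Scope R_scope.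

(** * Calculus along lines *)

Lemma derivable_pt_lim_affine a b x : derivable_pt_lim (fun s => a + s * b) x b.
Proof.
  assert (H : derivable_pt_lim ((fun _ => a) + mult_real_fct b id)%F x (0 + b * 1)).
  { apply derivable_pt_lim_plus; [apply derivable_pt_lim_const|].
    apply derivable_pt_lim_scal, derivable_pt_lim_id. }
  replace (0 + b * 1) with b in H by ring.
  apply (derivable_pt_lim_ext _ (fun s => a + s * b) x b) in H; [exact H|].
  intros s; unfold plus_fct, mult_real_fct, id; ring.
Qed.

Lemma derivable_pt_lim_pow_comp (f : R -> R) x l n :
  derivable_pt_lim f x l ->
  derivable_pt_lim (fun s => f s ^ n) x (INR n * f x ^ pred n * l).
Proof.
  intros H. apply derivable_pt_lim_ext with (f := comp (fun y => y ^ n) f); [reflexivity|].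
  apply derivable_pt_lim_comp; [exact H|apply derivable_pt_lim_pow].
Qed.

Definition dir_deriv (F G : R -> R -> R) (al be : R) : Prop :=
  forall x y s, derivable_pt_lim (fun s => F (x + s * al) (y + s * be)) s
                                  (G (x + s * al) (y + s * be)).

Lemma dir_deriv_at0 F G al be : dir_deriv F G al be -> forall x y,
  derivable_pt_lim (fun s => F (x + s * al) (y + s * be)) 0 (G x y).
Proof.
  intros H x y. pose proof (H x y 0) as D.
  replace (x + 0 * al) with x in D by ring. replace (y + 0 * be) with y in D by ring. exact D.
Qed.

Lemma const_along_line F G al be : dir_deriv F G al be -> (forall x y, G x y = 0) ->
  forall x y s, F (x + s * al) (y + s * be) = F x y.
Proof.
  intros HD HG x y s.
  set (g := fun s => F (x + s * al) (y + s * be)).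
  assert (Hg : forall c, derivable_pt_lim g c 0).
  { intros c. pose proof (HD x y c) as D. rewrite HG in D. exact D. }
  assert (E0 : g 0 = F x y) by (unfold g; f_equal; ring).
  change (g s = F x y). rewrite <- E0.
  destruct (Rtotal_order 0 s) as [Hs|[Hs|Hs]].
  - destruct (MVT_cor2 g (fun _ => 0) 0 s Hs) as [c [Hc _]]; [intros; apply Hg|lra].
  - subst; reflexivity.
  - destruct (MVT_cor2 g (fun _ => 0) s 0 Hs) as [c [Hc _]]; [intros; apply Hg|lra].
Qed.

Lemma zero_of_two_dir_derivs F G1 G2 a1 b1 a2 b2 :
  dir_deriv F G1 a1 b1 -> dir_deriv F G2 a2 b2 ->
  (forall x y, G1 x y = 0) -> (forall x y, G2 x y = 0) -> a1 * b2 - b1 * a2 <> 0 ->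
  F 0 0 = 0 -> forall x y, F x y = 0.
Proof.
  intros H1 H2 Z1 Z2 D F0 x y.
  set (s := (x * b2 - y * a2) / (a1 * b2 - b1 * a2)).
  set (t := (y * a1 - x * b1) / (a1 * b2 - b1 * a2)).
  replace x with ((0 + t * a2) + s * a1) by (unfold s, t; field; auto).
  replace y with ((0 + t * b2) + s * b1) by (unfold s, t; field; auto).
  rewrite (const_along_line F G1 a1 b1 H1 Z1), (const_along_line F G2 a2 b2 H2 Z2).
  exact F0.
Qed.

Lemma zero_at_from_punctured (g : R -> R) a l : derivable_pt_lim g a l ->
  (forall s, s <> a -> g s = 0) -> g a = 0.
Proof.
  intros D Z. destruct (Req_dec (g a) 0) as [E|E]; auto. exfalso.
  assert (C : continuity_pt g a) by apply (derivable_continuous_pt g a (exist _ l D)).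
  destruct (C (Rabs (g a)) ltac:(apply Rabs_pos_lt; auto)) as [alp [Halp Hc]].
  specialize (Hc (a + alp / 2)). simpl in Hc. unfold R_dist in Hc.
  rewrite Z in Hc by lra.
  assert (Rabs (0 - g a) < Rabs (g a)).
  { apply Hc. split; [split; [exact I|lra]|].
    replace (a + alp / 2 - a) with (alp / 2) by ring. rewrite Rabs_right; lra. }
  rewrite Rabs_minus_sym, Rminus_0_r in H. lra.
Qed.

(** * Binary forms as functions *)

Definition is_form (n : nat) (F : R -> R -> R) : Prop :=
  exists c, forall x y, F x y = binform n c x y.

Lemma is_form_ext n F G : (forall x y, F x y = G x y) -> is_form n F -> is_form n G.
Proof. intros H [c Hc]. exists c. intros; rewrite <- H; auto. Qed.

Lemma binform_S n c x y :
  binform (S n) c x y = c (S n) * x ^ S n + y * binform n c x y.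
Proof.
  unfold binform. rewrite tech5, Nat.sub_diag, scal_sum, Rplus_comm. f_equal.
  - simpl; ring.
  - apply sum_eq. intros i Hi. rewrite Nat.sub_succ_l by lia. simpl. ring.
Qed.

Lemma binform_0 c x y : binform 0 c x y = c 0%nat.
Proof. unfold binform. simpl. ring. Qed.

Lemma is_form0_iff F : is_form 0 F <-> exists c, forall x y, F x y = c.
Proof.
  split.
  - intros [c Hc]. exists (c 0%nat). intros; rewrite Hc, binform_0; auto.
  - intros [c Hc]. exists (fun _ => c). intros; rewrite Hc, binform_0; auto.
Qed.

Lemma is_form_S_inv n F : is_form (S n) F ->
  exists c G, is_form n G /\ forall x y, F x y = c * x ^ S n + y * G x y.
Proof.
  intros [c Hc]. exists (c (S n)), (binform n c). split.
  - exists c; auto.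
  - intros; rewrite Hc, binform_S; auto.
Qed.

Lemma is_form_S n c G : is_form n G ->
  is_form (S n) (fun x y => c * x ^ S n + y * G x y).
Proof.
  intros [cg Hg]. exists (fun i => if Nat.eqb i (S n) then c else cg i).
  intros x y. rewrite binform_S, Nat.eqb_refl, Hg. do 2 f_equal.
  unfold binform. apply sum_eq. intros i Hi.
  destruct (Nat.eqb_spec i (S n)); [lia|auto].
Qed.

Lemma is_form_const c : is_form 0 (fun _ _ => c).
Proof. apply is_form0_iff. exists c; auto. Qed.

Lemma is_form_zero n : is_form n (fun _ _ => 0).
Proof.
  induction n; [apply is_form_const|].
  eapply is_form_ext; [|apply (is_form_S n 0 _ IHn)]. intros; simpl; ring.
Qed.

Lemma is_form_add n F G : is_form n F -> is_form n G ->
  is_form n (fun x y => F x y + G x y).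
Proof.
  revert F G; induction n; intros F G HF HG.
  - apply is_form0_iff in HF as [a Ha]; apply is_form0_iff in HG as [b Hb].
    apply is_form0_iff. exists (a + b). intros; rewrite Ha, Hb; auto.
  - destruct (is_form_S_inv _ _ HF) as [a [F1 [H1 E1]]].
    destruct (is_form_S_inv _ _ HG) as [b [G1 [H2 E2]]].
    eapply is_form_ext; [|apply (is_form_S n (a + b) _ (IHn _ _ H1 H2))].
    intros; rewrite E1, E2; ring.
Qed.

Lemma is_form_scal n c F : is_form n F -> is_form n (fun x y => c * F x y).
Proof.
  revert F; induction n; intros F HF.
  - apply is_form0_iff in HF as [a Ha].
    apply is_form0_iff. exists (c * a). intros; rewrite Ha; auto.
  - destruct (is_form_S_inv _ _ HF) as [a [F1 [H1 E1]]].
    eapply is_form_ext; [|apply (is_form_S n (c * a) _ (IHn _ H1))].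
    intros; rewrite E1; ring.
Qed.

Lemma is_form_mulx n F : is_form n F -> is_form (S n) (fun x y => x * F x y).
Proof.
  revert F; induction n; intros F HF.
  - apply is_form0_iff in HF as [a Ha].
    eapply is_form_ext; [|apply (is_form_S 0 a _ (is_form_zero 0))].
    intros; rewrite Ha; simpl; ring.
  - destruct (is_form_S_inv _ _ HF) as [a [F1 [H1 E1]]].
    eapply is_form_ext; [|apply (is_form_S (S n) a _ (IHn _ H1))].
    intros; rewrite E1; simpl; ring.
Qed.

Lemma is_form_muly n F : is_form n F -> is_form (S n) (fun x y => y * F x y).
Proof.
  intros HF. eapply is_form_ext; [|apply (is_form_S n 0 _ HF)]. intros; simpl; ring.
Qed.

Lemma is_form_mul_lin n u v F : is_form n F ->
  is_form (S n) (fun x y => (u * x + v * y) * F x y).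
Proof.
  intros HF.
  eapply is_form_ext;
    [|apply is_form_add; [apply (is_form_scal _ u), is_form_mulx, HF
                         |apply (is_form_scal _ v), is_form_muly, HF]].
  intros; simpl; ring.
Qed.

Lemma is_form_pow_lin n u v : is_form n (fun x y => (u * x + v * y) ^ n).
Proof.
  induction n.
  - eapply is_form_ext; [|apply (is_form_const 1)]. intros; simpl; ring.
  - eapply is_form_ext; [|apply (is_form_mul_lin _ u v _ IHn)]. intros; simpl; ring.
Qed.

Lemma is_form_xpow n : is_form n (fun x y => x ^ n).
Proof.
  eapply is_form_ext; [|apply (is_form_pow_lin n 1 0)].
  intros x y; cbv beta; f_equal; ring.
Qed.

Lemma is_form_ypow n : is_form n (fun x y => y ^ n).
Proof.
  eapply is_form_ext; [|apply (is_form_pow_lin n 0 1)].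
  intros x y; cbv beta; f_equal; ring.
Qed.

Lemma is_form_homog n F : is_form n F ->
  forall t x y, F (t * x) (t * y) = t ^ n * F x y.
Proof.
  revert F; induction n; intros F HF t x y.
  - apply is_form0_iff in HF as [a Ha]. rewrite !Ha. simpl; ring.
  - destruct (is_form_S_inv _ _ HF) as [a [F1 [H1 E1]]].
    rewrite !E1, (IHn _ H1), Rpow_mult_distr. simpl; ring.
Qed.

Lemma geometric_factor n b : exists T, is_form n T /\
  forall x y, x ^ S n - (b * y) ^ S n = (x - b * y) * T x y.
Proof.
  induction n as [|n [T [HT ET]]].
  - exists (fun _ _ => 1). split; [apply is_form_const|]. intros; simpl; ring.
  - exists (fun x y => x * T x y + b ^ S n * y ^ S n). split.
    + apply is_form_add; [apply is_form_mulx; auto|apply is_form_scal, is_form_ypow].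
    + intros x y.
      transitivity (x * (x ^ S n - (b * y) ^ S n) + (x - b * y) * (b * y) ^ S n);
        [simpl; ring|].
      rewrite ET, Rpow_mult_distr. ring.
Qed.

Lemma factor_at_b1 n F b : is_form (S n) F -> F b 1 = 0 ->
  exists Q, is_form n Q /\ forall x y, F x y = (x - b * y) * Q x y.
Proof.
  revert F; induction n; intros F HF Hz.
  - destruct (is_form_S_inv _ _ HF) as [c [G [HG EG]]].
    apply is_form0_iff in HG as [g Hg].
    rewrite EG, Hg in Hz. exists (fun _ _ => c). split; [apply is_form_const|].
    intros x y. rewrite EG, Hg. replace g with (- c * b) by (simpl in Hz; lra).
    simpl; ring.
  - destruct (is_form_S_inv _ _ HF) as [c [G [HG EG]]].
    destruct (geometric_factor (S n) b) as [T [HT ET]].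
    set (G2 := fun x y => c * b ^ S (S n) * y ^ S n + G x y).
    assert (HG2 : is_form (S n) G2) by (apply is_form_add; [apply is_form_scal, is_form_ypow|auto]).
    assert (EF : forall x y, F x y = c * ((x - b * y) * T x y) + y * G2 x y).
    { intros. rewrite EG, <- ET. unfold G2. rewrite Rpow_mult_distr. simpl; ring. }
    assert (Hz2 : G2 b 1 = 0).
    { rewrite EF in Hz. replace (b - b * 1) with 0 in Hz by ring. lra. }
    destruct (IHn _ HG2 Hz2) as [Q2 [HQ2 EQ2]].
    exists (fun x y => c * T x y + y * Q2 x y). split.
    + apply is_form_add; [apply is_form_scal; auto|apply is_form_muly; auto].
    + intros x y. rewrite EF, EQ2. ring.
Qed.

Lemma is_form_dir_deriv n F al be : is_form n F ->
  exists G, is_form (pred n) G /\ (n = 0%nat -> forall x y, G x y = 0) /\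
            dir_deriv F G al be.
Proof.
  revert F; induction n; intros F HF.
  - apply is_form0_iff in HF as [c Hc].
    exists (fun _ _ => 0). split; [apply is_form_const|]. split; [auto|].
    intros x y s. eapply derivable_pt_lim_ext; [|apply (derivable_pt_lim_const c)].
    intros; simpl; rewrite Hc; auto.
  - destruct (is_form_S_inv _ _ HF) as [c [F1 [H1 E1]]].
    destruct (IHn _ H1) as [G1 [HG1 [Z1 D1]]].
    exists (fun x y => c * INR (S n) * al * x ^ n + be * F1 x y + y * G1 x y).
    split; [|split; [discriminate|]].
    + simpl. apply is_form_add; [apply is_form_add|].
      * apply is_form_scal, is_form_xpow.
      * apply is_form_scal; auto.
      * destruct n; [|apply is_form_muly; auto].
        eapply is_form_ext; [|apply (is_form_zero 0)]. intros; rewrite Z1; auto; ring.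
    + intros x y s.
      apply derivable_pt_lim_ext with (f := fun s => c * (x + s * al) ^ S n +
                           (y + s * be) * F1 (x + s * al) (y + s * be)).
      { intros s'. rewrite E1. reflexivity. }
      replace (c * INR (S n) * al * (x + s * al) ^ n + be * F1 (x + s * al) (y + s * be)
               + (y + s * be) * G1 (x + s * al) (y + s * be))
        with (c * (INR (S n) * (x + s * al) ^ pred (S n) * al) +
              (be * F1 (x + s * al) (y + s * be) + (y + s * be) * G1 (x + s * al) (y + s * be)))
        by (simpl; ring).
      apply (derivable_pt_lim_plus (fun s => c * (x + s * al) ^ S n)).
      * apply (derivable_pt_lim_scal (fun s => (x + s * al) ^ S n)).
        apply (derivable_pt_lim_pow_comp (fun s => x + s * al)), derivable_pt_lim_affine.
      * apply (derivable_pt_lim_mult (fun s => y + s * be)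
                 (fun s => F1 (x + s * al) (y + s * be))).
        -- apply derivable_pt_lim_affine.
        -- apply D1.
Qed.

(** * Zeros of forms, counted with multiplicity *)

(* Points of the projective line are represented by nonzero vectors;
   two of them represent the same point when they are proportional. *)
Definition nonzero_pt (P : R * R) : Prop := fst P <> 0 \/ snd P <> 0.

Definition proportional (P Q : R * R) : Prop := fst P * snd Q - snd P * fst Q = 0.

Lemma lin_vanish_proportional u v P Q : u * fst P + v * snd P = 0 ->
  proportional P Q -> nonzero_pt P -> u * fst Q + v * snd Q = 0.
Proof.
  unfold proportional, nonzero_pt. destruct P as [p1 p2], Q as [q1 q2]; simpl.
  intros H1 H2 [H3|H3].
  - apply (Rmult_eq_reg_l p1); auto.
    replace (p1 * (u * q1 + v * q2)) with (q1 * (u * p1 + v * p2) + v * (p1 * q2 - p2 * q1))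
      by ring.
    rewrite H1, H2; ring.
  - apply (Rmult_eq_reg_l p2); auto.
    replace (p2 * (u * q1 + v * q2)) with (q2 * (u * p1 + v * p2) - u * (p1 * q2 - p2 * q1))
      by ring.
    rewrite H1, H2; ring.
Qed.

(* [vanishes_to F P e]: F is divisible by the e-th power of a nonzero linear
   form vanishing at P, i.e. P is a zero of F of multiplicity at least e. *)
Definition vanishes_to (F : R -> R -> R) (P : R * R) (e : nat) : Prop :=
  exists u v, (u <> 0 \/ v <> 0) /\ u * fst P + v * snd P = 0 /\
  exists k Q, is_form k Q /\ forall x y, F x y = (u * x + v * y) ^ e * Q x y.

Lemma vanishes_to_zero F P e : vanishes_to F P e -> (1 <= e)%nat -> F (fst P) (snd P) = 0.
Proof.
  intros [u [v [_ [Hl [k [Q [_ E]]]]]]] He. rewrite E, Hl.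
  destruct e; [lia|]. simpl; ring.
Qed.

Lemma vanishes_to_proportional F P Q e :
  vanishes_to F P e -> proportional P Q -> nonzero_pt P -> vanishes_to F Q e.
Proof.
  intros [u [v [Huv [Hl Hr]]]] Hp Hnz. exists u, v.
  split; [auto|split; [eapply lin_vanish_proportional; eauto|auto]].
Qed.

Lemma vanishes_to_le F P e e' : vanishes_to F P e -> (e' <= e)%nat -> vanishes_to F P e'.
Proof.
  intros H Hle. induction Hle as [|e Hle IH]; auto. apply IH.
  destruct H as [u [v [Huv [Hl [k [Q [HQ E]]]]]]].
  exists u, v. split; [auto|split; [auto|]].
  exists (S k), (fun x y => (u * x + v * y) * Q x y). split.
  - apply is_form_mul_lin; auto.
  - intros; rewrite E; simpl; ring.
Qed.

Lemma vanishes_to_of_zero n F P : is_form n F -> nonzero_pt P ->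
  F (fst P) (snd P) = 0 -> vanishes_to F P 1.
Proof.
  destruct P as [p q]; unfold nonzero_pt; simpl. intros HF Hnz Hz.
  destruct n as [|n].
  - apply is_form0_iff in HF as [c Hc]. rewrite Hc in Hz.
    exists (- q), p. split; [destruct Hnz; [right|left]; lra|]. split; [simpl; ring|].
    exists 0%nat, (fun _ _ => 0). split; [apply is_form_const|].
    intros. rewrite Hc, Hz. ring.
  - destruct (Req_EM_T q 0) as [Hq|Hq].
    + subst q. destruct Hnz as [Hp|Hp]; [|lra].
      destruct (is_form_S_inv _ _ HF) as [c [G [HG EG]]].
      assert (Hc : c = 0).
      { rewrite EG, Rmult_0_l, Rplus_0_r in Hz.
        apply Rmult_integral in Hz as [Hz|Hz]; auto.
        exfalso. apply (pow_nonzero p (S n)); auto. }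
      exists 0, 1. split; [right; lra|]. split; [simpl; ring|].
      exists n, G. split; auto. intros; rewrite EG, Hc; simpl; ring.
    + assert (Hb : F (p / q) 1 = 0).
      { assert (E := is_form_homog _ _ HF q (p / q) 1).
        replace (q * (p / q)) with p in E by (field; auto).
        rewrite Rmult_1_r, Hz in E. symmetry in E.
        apply Rmult_integral in E as [E|E]; auto.
        exfalso. apply (pow_nonzero q (S n)); auto. }
      destruct (factor_at_b1 _ _ _ HF Hb) as [Q [HQ EQ]].
      exists 1, (- (p / q)). split; [left; lra|]. split; [simpl; field; auto|].
      exists n, Q. split; auto. intros; rewrite EQ; ring.
Qed.

Lemma dir_deriv_lin_pow u v e k Q al be : is_form k Q ->
  exists GQ, is_form (pred k) GQ /\ (k = 0%nat -> forall x y, GQ x y = 0) /\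
  forall x y, derivable_pt_lim
    (fun s => (u * (x + s * al) + v * (y + s * be)) ^ e * Q (x + s * al) (y + s * be)) 0
    (INR e * (u * x + v * y) ^ pred e * (u * al + v * be) * Q x y
     + (u * x + v * y) ^ e * GQ x y).
Proof.
  intros HQ. destruct (is_form_dir_deriv k Q al be HQ) as [GQ [HG [Z D]]].
  exists GQ. split; [auto|split; [auto|]]. intros x y.
  assert (L : derivable_pt_lim (fun s => u * (x + s * al) + v * (y + s * be)) 0
                               (u * al + v * be)).
  { eapply derivable_pt_lim_ext; [|apply (derivable_pt_lim_affine (u * x + v * y))].
    intros; simpl; ring. }
  pose proof (derivable_pt_lim_mult _ _ _ _ _
                (derivable_pt_lim_pow_comp _ _ _ e L) (dir_deriv_at0 _ _ _ _ D x y)) as M.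
  cbv beta in M.
  replace (u * (x + 0 * al) + v * (y + 0 * be)) with (u * x + v * y) in M by ring.
  replace (x + 0 * al) with x in M by ring. replace (y + 0 * be) with y in M by ring.
  exact M.
Qed.

Lemma vanishes_to_dir_deriv F G al be P e : dir_deriv F G al be ->
  vanishes_to F P (S e) -> vanishes_to G P e.
Proof.
  intros HD [u [v [Huv [Hl [k [Q [HQ E]]]]]]].
  destruct (dir_deriv_lin_pow u v (S e) k Q al be HQ) as [GQ [HG [Z D]]].
  exists u, v. split; [auto|split; [auto|]].
  exists k, (fun x y => INR (S e) * (u * al + v * be) * Q x y + (u * x + v * y) * GQ x y).
  split.
  - destruct k.
    + eapply is_form_ext; [|apply (is_form_scal 0 (INR (S e) * (u * al + v * be)) _ HQ)].
      intros; rewrite Z; auto; ring.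
    + apply is_form_add; [apply is_form_scal; auto|apply is_form_mul_lin; auto].
  - intros x y. apply (uniqueness_limite (fun s => F (x + s * al) (y + s * be)) 0).
    + apply dir_deriv_at0; auto.
    + replace ((u * x + v * y) ^ e * (INR (S e) * (u * al + v * be) * Q x y
                                       + (u * x + v * y) * GQ x y))
        with (INR (S e) * (u * x + v * y) ^ pred (S e) * (u * al + v * be) * Q x y
              + (u * x + v * y) ^ S e * GQ x y) by (simpl; ring).
      eapply derivable_pt_lim_ext; [|apply D]. intros s; simpl. rewrite E. reflexivity.
Qed.

Lemma vanishes_to_dir_deriv_along F G al be P e : dir_deriv F G al be ->
  vanishes_to F P e -> proportional P (al, be) -> nonzero_pt P -> vanishes_to G P e.
Proof.
  intros HD [u [v [Huv [Hl [k [Q [HQ E]]]]]]] Hp Hnz.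
  assert (Hv : u * al + v * be = 0) by exact (lin_vanish_proportional u v P (al, be) Hl Hp Hnz).
  destruct (dir_deriv_lin_pow u v e k Q al be HQ) as [GQ [HG [_ D]]].
  exists u, v. split; [auto|split; [auto|]].
  exists (pred k), GQ. split; [auto|].
  intros x y. apply (uniqueness_limite (fun s => F (x + s * al) (y + s * be)) 0).
  - apply dir_deriv_at0; auto.
  - replace ((u * x + v * y) ^ e * GQ x y)
      with (INR e * (u * x + v * y) ^ pred e * (u * al + v * be) * Q x y
            + (u * x + v * y) ^ e * GQ x y) by (rewrite Hv; ring).
    eapply derivable_pt_lim_ext; [|apply D]. intros s; simpl. rewrite E. reflexivity.
Qed.

Definition distinct_pts (l : list (R * R * nat)) : Prop :=
  ForallOrdPairs (fun q q' => ~ proportional (fst q) (fst q')) l.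

Definition zero_list (F : R -> R -> R) (l : list (R * R * nat)) : Prop :=
  distinct_pts l /\ forall q, In q l -> nonzero_pt (fst q) /\ vanishes_to F (fst q) (snd q).

Definition mult_sum (l : list (R * R * nat)) : nat := list_sum (map snd l).

Lemma zero_list_ext F G l : (forall x y, F x y = G x y) -> zero_list F l -> zero_list G l.
Proof.
  intros E [Hd Hv]. split; [exact Hd|]. intros q Hq.
  destruct (Hv q Hq) as [Hn [u [v [Huv [Hl [k [Q [HQ EQ]]]]]]]].
  split; [exact Hn|]. exists u, v. split; [auto|split; [auto|]].
  exists k, Q. split; [auto|]. intros; rewrite <- E; auto.
Qed.

Lemma distinct_pts_iff_key {K : Type} (key : R * R -> K) l :
  (forall q q', In q l -> In q' l ->
     (proportional (fst q) (fst q') <-> key (fst q) = key (fst q'))) ->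
  distinct_pts l <-> NoDup (map (fun q => key (fst q)) l).
Proof.
  induction l as [|q l IH]; intros Hk; simpl.
  - split; constructor.
  - assert (IH' := IH ltac:(intros; apply Hk; simpl; auto)).
    rewrite NoDup_cons_iff, <- IH'. split.
    + intros Hd. inversion Hd as [|? ? Hf Hl]; subst. split; [|exact Hl].
      intros Hin. apply in_map_iff in Hin as [q' [Eq Hq']].
      rewrite Forall_forall in Hf. apply (Hf q' Hq'), Hk; simpl; auto.
    + intros [Hn Hl]. constructor; [|exact Hl]. apply Forall_forall.
      intros q' Hq' Hp. apply Hn, in_map_iff. exists q'.
      split; [symmetry; apply Hk; simpl; auto|exact Hq'].
Qed.

Definition positive_mult (q : R * R * nat) : bool := Nat.ltb 0 (snd q).

Lemma distinct_pts_filter f l : distinct_pts l -> distinct_pts (filter f l).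
Proof.
  induction 1 as [|q l Hf Hd IH]; simpl; [constructor|].
  destruct (f q); [|exact IH]. constructor; [|exact IH].
  rewrite Forall_forall in *. intros q' Hq'. apply filter_In in Hq'. apply Hf; tauto.
Qed.

Lemma zero_list_filter F f l : zero_list F l -> zero_list F (filter f l).
Proof.
  intros [Hd Hv]. split; [apply distinct_pts_filter, Hd|].
  intros q Hq. apply filter_In in Hq. apply Hv; tauto.
Qed.

Lemma mult_sum_filter_positive l : mult_sum (filter positive_mult l) = mult_sum l.
Proof.
  unfold mult_sum, positive_mult.
  induction l as [|q l IH]; simpl; auto.
  destruct (Nat.ltb_spec 0 (snd q)); simpl; lia.
Qed.

Lemma mult_sum_ones l : (forall q, In q l -> snd q = 1%nat) -> mult_sum l = length l.
Proof.
  unfold mult_sum. induction l as [|q l IH]; intros H; simpl; auto.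
  rewrite H, IH; [reflexivity|intros; apply H; simpl; auto|simpl; auto].
Qed.

Lemma mult_sum_no_zeros F l : (forall P, nonzero_pt P -> F (fst P) (snd P) <> 0) ->
  zero_list F l -> mult_sum l = 0%nat.
Proof.
  intros H [_ Hv]. unfold mult_sum.
  induction l as [|q l IH]; simpl; auto.
  rewrite IH by (intros; apply Hv; simpl; auto).
  destruct (Hv q (or_introl eq_refl)) as [Hn Ho].
  destruct (snd q) as [|e] eqn:E; auto. exfalso.
  apply (H (fst q) Hn), (vanishes_to_zero F (fst q) (S e)); [|lia].
  exact Ho.
Qed.

(** * Rolle's theorem for finitely many zeros *)

Lemma remove_max (T : list R) : T <> nil -> NoDup T ->
  exists m T', In m T /\ (forall t, In t T -> t <= m) /\ NoDup T' /\ ~ In m T' /\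
               length T = S (length T') /\ (forall t, In t T <-> t = m \/ In t T').
Proof.
  intros Hne Hnd.
  assert (Hmax : exists m, In m T /\ forall t, In t T -> t <= m).
  { clear Hnd. induction T as [|a T IH]; [congruence|].
    destruct T as [|b T'].
    - exists a. split; [left; auto|]. intros t [->|[]]; lra.
    - destruct IH as [m [Hm Hmax]]; [discriminate|].
      destruct (Rle_dec a m).
      + exists m. split; [right; auto|]. intros t [<-|Ht]; auto.
      + exists a. split; [left; auto|]. intros t [<-|Ht]; [lra|].
        specialize (Hmax t Ht); lra. }
  destruct Hmax as [m [Hm Hmax]].
  destruct (in_split _ _ Hm) as [T1 [T2 ->]].
  exists m, (T1 ++ T2). split; [auto|split; [auto|]].
  split; [eapply NoDup_remove_1; eauto|split; [eapply NoDup_remove_2; eauto|]].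
  split; [rewrite !length_app; simpl; lia|].
  intros t. rewrite !in_app_iff. simpl. intuition (subst; auto).
Qed.

Lemma rolle_list (f f' : R -> R) : (forall t, derivable_pt_lim f t (f' t)) ->
  forall T, NoDup T -> (forall t, In t T -> f t = 0) ->
  exists X, NoDup X /\ length X = pred (length T) /\
    (forall z, In z X -> f' z = 0 /\ ~ In z T /\ exists t, In t T /\ z < t).
Proof.
  intros Hd T.
  induction T as [T IH] using (Wf_nat.induction_ltof1 _ (@length R)).
  unfold Wf_nat.ltof in IH.
  intros Hnd Hz. destruct T as [|a T0].
  - exists nil. split; [constructor|]. split; [auto|]. intros z [].
  - destruct (remove_max (a :: T0) ltac:(discriminate) Hnd)
      as [m [T' [Hm [Hmax [Hnd' [Hnm [Hlen Hmem]]]]]]].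
    rewrite Hlen. destruct T' as [|b T''].
    { exists nil. split; [constructor|]. split; [auto|]. intros z []. }
    destruct (IH (b :: T'') ltac:(rewrite Hlen; auto) Hnd'
                 ltac:(intros t Ht; apply Hz, Hmem; auto)) as [X [HX1 [HX2 HX3]]].
    destruct (remove_max (b :: T'') ltac:(discriminate) Hnd') as [M [_ [HM [HMmax _]]]].
    assert (HMm : M < m).
    { assert (M <= m) by (apply Hmax, Hmem; auto).
      destruct (Req_dec M m); [subst; contradiction|lra]. }
    destruct (MVT_cor2 f f' M m HMm) as [c [Hc1 Hc2]]; [intros; apply Hd|].
    rewrite (Hz m Hm), (Hz M (proj2 (Hmem M) (or_intror HM))) in Hc1.
    assert (Hfc : f' c = 0).
    { assert (E : f' c * (m - M) = 0) by lra.
      apply Rmult_integral in E as [E|E]; [auto|lra]. }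
    exists (c :: X). split; [|split].
    + constructor; auto. intros Hin. destruct (HX3 c Hin) as [_ [_ [t [Ht Hct]]]].
      specialize (HMmax t Ht). lra.
    + simpl. rewrite HX2. reflexivity.
    + intros z [<-|Hin].
      * split; [auto|split].
        -- rewrite Hmem. intros [E|E]; [lra|]. specialize (HMmax c E). lra.
        -- exists m. split; [auto|lra].
      * destruct (HX3 z Hin) as [H1 [H2 [t [Ht Hzt]]]]. split; [auto|split].
        -- rewrite Hmem. intros [E|E]; [|contradiction].
           subst z. specialize (HMmax t Ht). lra.
        -- exists t. split; [apply Hmem; auto|auto].
Qed.

(* Let G be the derivative of a form F in a unit direction w = (al, be).
   Each zero P of F not proportional to w loses one unit of multiplicity,
   the zero proportional to w (if any) keeps its multiplicity, and Rolle's
   theorem on the affine line through (be, -al) parallel to w provides new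
   zeros between consecutive transversal zeros.  Hence the total multiplicity
   drops by at most one. *)
Section RolleStep.

Variables (F G : R -> R -> R) (al be : R) (n : nat).
Hypothesis unit_dir : al * al + be * be = 1.
Hypothesis deriv_FG : dir_deriv F G al be.
Hypothesis form_G : is_form n G.

(* Coordinates in the orthonormal frame ((be, -al), (al, be)). *)
Definition coord0 (P : R * R) : R := fst P * be - snd P * al.
Definition coord1 (P : R * R) : R := fst P * al + snd P * be.

(* The affine line {coord0 = 1}, parametrized by coord1. *)
Definition line_pt (t : R) : R * R := (be + t * al, - al + t * be).

(* The projective point of P: None for the point w, else the parameter of
   the intersection of the line through P with {coord0 = 1}. *)
Definition line_key (P : R * R) : option R :=
  if Req_EM_T (coord0 P) 0 then None else Some (coord1 P / coord0 P).

Lemma det_in_frame P Q :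
  fst P * snd Q - snd P * fst Q = coord0 P * coord1 Q - coord1 P * coord0 Q.
Proof.
  unfold coord0, coord1.
  transitivity ((fst P * snd Q - snd P * fst Q) * (al * al + be * be));
    [rewrite unit_dir; ring|ring].
Qed.

Lemma coord1_nonzero P : nonzero_pt P -> coord0 P = 0 -> coord1 P <> 0.
Proof.
  intros Hn H0 H1. unfold nonzero_pt, coord0, coord1 in *.
  assert (E : fst P * fst P + snd P * snd P = 0).
  { transitivity ((fst P * fst P + snd P * snd P) * (al * al + be * be));
      [rewrite unit_dir; ring|].
    transitivity ((fst P * be - snd P * al) ^ 2 + (fst P * al + snd P * be) ^ 2); [ring|].
    rewrite H0, H1. ring. }
  destruct Hn; nra.
Qed.

Lemma proportional_iff_line_key P Q : nonzero_pt P -> nonzero_pt Q ->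
  (proportional P Q <-> line_key P = line_key Q).
Proof.
  intros HP HQ. unfold proportional, line_key. rewrite det_in_frame.
  destruct (Req_EM_T (coord0 P) 0) as [EP|EP], (Req_EM_T (coord0 Q) 0) as [EQ|EQ].
  - rewrite EP, EQ. split; [auto|intros; ring].
  - rewrite EP. pose proof (coord1_nonzero P HP EP).
    split; [intros E; exfalso; apply (Rmult_integral_contrapositive _ _ (conj H EQ)); lra
           |discriminate].
  - rewrite EQ. pose proof (coord1_nonzero Q HQ EQ).
    split; [intros E; exfalso; apply (Rmult_integral_contrapositive _ _ (conj EP H)); lra
           |discriminate].
  - split.
    + intros E. f_equal. apply (Rmult_eq_reg_l (coord0 P * coord0 Q));
        [|apply Rmult_integral_contrapositive; auto].
      field_simplify; auto. lra.
    + intros E. injection E as E.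
      replace (coord0 P * coord1 Q - coord1 P * coord0 Q)
        with (coord0 P * coord0 Q * (coord1 Q / coord0 Q - coord1 P / coord0 P))
        by (field; auto).
      rewrite E. ring.
Qed.

Lemma line_key_line_pt t : line_key (line_pt t) = Some t.
Proof.
  unfold line_key, coord0, coord1, line_pt; simpl.
  replace ((be + t * al) * be - (- al + t * be) * al) with 1
    by (rewrite <- unit_dir; ring).
  destruct (Req_EM_T 1 0) as [E|_]; [lra|].
  f_equal. replace ((be + t * al) * al + (- al + t * be) * be)
    with (t * (al * al + be * be)) by ring.
  rewrite unit_dir. field.
Qed.

Lemma line_pt_nonzero t : nonzero_pt (line_pt t).
Proof.
  unfold nonzero_pt, line_pt; simpl.
  destruct (Req_dec (be + t * al) 0); [right|left]; auto. intros E. nra.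
Qed.

Definition transversal (q : R * R * nat) : bool :=
  match line_key (fst q) with Some _ => true | None => false end.

(* The multiplicity a listed zero keeps for G. *)
Definition lower (q : R * R * nat) : R * R * nat :=
  (fst q, if transversal q then pred (snd q) else snd q).

Lemma lower_vanishes q : nonzero_pt (fst q) -> vanishes_to F (fst q) (snd q) ->
  (1 <= snd q)%nat -> vanishes_to G (fst (lower q)) (snd (lower q)).
Proof.
  intros Hn Hv Hpos. unfold lower, transversal; simpl.
  destruct (line_key (fst q)) eqn:Ek.
  - apply (vanishes_to_dir_deriv F G al be). exact deriv_FG.
    replace (S (pred (snd q))) with (snd q) by lia. exact Hv.
  - apply (vanishes_to_dir_deriv_along F G al be); auto.
    unfold line_key in Ek. destruct (Req_EM_T (coord0 (fst q)) 0) as [E|]; [|discriminate].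
    exact E.
Qed.

Lemma mult_sum_lower l : (forall q, In q l -> (1 <= snd q)%nat) ->
  mult_sum l = (mult_sum (map lower l) + length (filter transversal l))%nat.
Proof.
  unfold mult_sum. induction l as [|q l IH]; intros H; simpl; auto.
  rewrite IH by (intros; apply H; simpl; auto).
  assert (1 <= snd q)%nat by (apply H; simpl; auto).
  change (snd (lower q)) with (if transversal q then pred (snd q) else snd q).
  destruct (transversal q); simpl; lia.
Qed.

Definition transversal_params (l : list (R * R * nat)) : list R :=
  map (fun q => coord1 (fst q) / coord0 (fst q)) (filter transversal l).

Lemma keys_transversal l :
  map (fun q => line_key (fst q)) (filter transversal l) = map Some (transversal_params l).
Proof.
  unfold transversal_params. induction l as [|q l IH]; simpl; auto.
  destruct (transversal q) eqn:Et; simpl; [|exact IH].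
  unfold transversal in Et. destruct (line_key (fst q)) eqn:Ek; [|discriminate].
  rewrite IH. unfold line_key in Ek.
  destruct (Req_EM_T (coord0 (fst q)) 0); [discriminate|congruence].
Qed.

Lemma zero_list_keys F' l : zero_list F' l -> NoDup (map (fun q => line_key (fst q)) l).
Proof.
  intros [Hd Hv]. apply (distinct_pts_iff_key line_key l); auto.
  intros q q' Hq Hq'. apply proportional_iff_line_key; [apply Hv|apply Hv]; auto.
Qed.

Lemma transversal_params_zeros l : zero_list F l ->
  (forall q, In q l -> (1 <= snd q)%nat) ->
  forall t, In t (transversal_params l) -> F (fst (line_pt t)) (snd (line_pt t)) = 0.
Proof.
  intros [Hd Hv] Hpos t Ht.
  assert (Hk : In (Some t) (map (fun q => line_key (fst q)) (filter transversal l)))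
    by (rewrite keys_transversal; apply in_map; exact Ht).
  apply in_map_iff in Hk as [q [Ek Hq]]. apply filter_In in Hq as [Hq _].
  destruct (Hv q Hq) as [Hn Ho].
  apply (vanishes_to_zero F _ (snd q)); [|apply Hpos; auto].
  apply (vanishes_to_proportional F (fst q)); auto.
  apply proportional_iff_line_key; [auto|apply line_pt_nonzero|].
  rewrite line_key_line_pt. exact Ek.
Qed.

Definition new_zero (z : R) : R * R * nat := (line_pt z, 1%nat).

Lemma new_zeros_distinct l X : zero_list F l -> NoDup X ->
  (forall z, In z X -> ~ In z (transversal_params l)) ->
  distinct_pts (map lower l ++ map new_zero X).
Proof.
  intros HZ HX HXT. apply (distinct_pts_iff_key line_key).
  { intros q q' Hq Hq'.
    assert (Hnz : forall q, In q (map lower l ++ map new_zero X) -> nonzero_pt (fst q)).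
    { intros q0 Hq0. apply in_app_or in Hq0 as [H0|H0]; apply in_map_iff in H0 as [p [<- Hp]].
      - apply (proj2 HZ p Hp).
      - apply line_pt_nonzero. }
    apply proportional_iff_line_key; auto. }
  rewrite map_app, !map_map. simpl. rewrite (map_ext _ _ line_key_line_pt).
  apply NoDup_app; [apply zero_list_keys with F, HZ| |].
  - apply NoDup_map_NoDup_ForallPairs; [intros a b _ _ E; injection E; auto|exact HX].
  - intros k Hk HkX. apply in_map_iff in HkX as [z [<- Hz]]. apply (HXT z Hz).
    apply in_map_iff in Hk as [q [Ek Hq]]. simpl in Ek.
    assert (Hin : In (Some z) (map (fun q => line_key (fst q)) (filter transversal l))).
    { apply in_map_iff. exists q. split; [exact Ek|]. apply filter_In.
      split; [exact Hq|]. unfold transversal. rewrite Ek. reflexivity. }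
    rewrite keys_transversal in Hin. apply in_map_iff in Hin as [z' [E Hz']].
    injection E as ->. exact Hz'.
Qed.

Lemma rolle_step pts : zero_list F pts ->
  exists pts', zero_list G pts' /\ (mult_sum pts <= S (mult_sum pts'))%nat.
Proof.
  intros HZ.
  set (P1 := filter positive_mult pts).
  assert (HP1 : zero_list F P1) by (apply zero_list_filter; auto).
  assert (Hpos : forall q, In q P1 -> (1 <= snd q)%nat).
  { intros q Hq. apply filter_In in Hq as [_ Hq]. unfold positive_mult in Hq.
    apply Nat.ltb_lt in Hq. lia. }
  set (T := transversal_params P1).
  assert (HT : NoDup T).
  { apply (NoDup_map_inv Some). unfold T. rewrite <- keys_transversal.
    apply zero_list_keys with F, zero_list_filter, HP1. }
  destruct (rolle_list (fun t => F (fst (line_pt t)) (snd (line_pt t)))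
                       (fun t => G (fst (line_pt t)) (snd (line_pt t)))
                       (fun t => deriv_FG be (- al) t) T HT
                       (transversal_params_zeros P1 HP1 Hpos)) as [X [HX1 [HX2 HX3]]].
  exists (map lower P1 ++ map new_zero X). split; [split|].
  - apply new_zeros_distinct; auto. intros z Hz. apply (HX3 z Hz).
  - intros q Hq. apply in_app_or in Hq as [Hq|Hq]; apply in_map_iff in Hq as [p [<- Hp]].
    + destruct (proj2 HP1 p Hp) as [Hn Hv]. split; [exact Hn|].
      apply lower_vanishes; auto.
    + split; [apply line_pt_nonzero|].
      apply (vanishes_to_of_zero n); [exact form_G|apply line_pt_nonzero|].
      apply (HX3 p Hp).
  - unfold mult_sum at 2. rewrite map_app, list_sum_app.
    fold (mult_sum (map lower P1)) (mult_sum (map new_zero X)).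
    rewrite (mult_sum_ones (map new_zero X)), length_map, HX2
      by (intros q Hq; apply in_map_iff in Hq as [z [<- _]]; reflexivity). unfold T, transversal_params. rewrite length_map.
    rewrite <- (mult_sum_filter_positive pts). fold P1.
    rewrite (mult_sum_lower P1 Hpos). lia.
Qed.

End RolleStep.

(** * Counting sign changes *)

Definition sign_change (a b : R) : nat := if Rlt_dec (a * b) 0 then 1%nat else 0%nat.

Fixpoint changes (h : nat -> R) (a n : nat) : nat :=
  match n with
  | O => 0%nat
  | S m => (sign_change (h a) (h (S a)) + changes h (S a) m)%nat
  end.

Definition cyclic_coeffs (d : nat) (la : nat -> R) (r : nat) (i : nat) : R :=
  if Nat.ltb i r then la i else (-1) ^ d * la 0%nat.

Lemma cyclic_coeffs_lt d la r i : (i < r)%nat -> cyclic_coeffs d la r i = la i.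
Proof. unfold cyclic_coeffs. destruct (Nat.ltb_spec i r); [auto|lia]. Qed.

Lemma cyclic_coeffs_last d la r : cyclic_coeffs d la r r = (-1) ^ d * la 0%nat.
Proof. unfold cyclic_coeffs. rewrite Nat.ltb_irrefl. reflexivity. Qed.

Lemma neg1_pow_nonzero d : (-1) ^ d <> 0.
Proof. apply pow_nonzero. lra. Qed.

Lemma neg1_pow_cases d : (-1) ^ d = 1 \/ (-1) ^ d = -1.
Proof. induction d as [|d [E|E]]; simpl; [left|right|left]; try rewrite E; ring. Qed.

Lemma neg1_pow_sq d : (-1) ^ d * (-1) ^ d = 1.
Proof. rewrite <- Rpow_mult_distr. replace (-1 * -1) with 1 by ring. apply pow1. Qed.

Lemma neg1_pow_pred d : (1 <= d)%nat -> (-1) ^ pred d * (-1) ^ d = -1.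
Proof.
  intros Hd. destruct d as [|d]; [lia|]. simpl.
  replace ((-1) ^ d * (-1 * (-1) ^ d)) with (- ((-1) ^ d * (-1) ^ d)) by ring.
  rewrite neg1_pow_sq. ring.
Qed.

Lemma cyclic_coeffs_nonzero d la r i : (0 < r)%nat -> (forall k, (k < r)%nat -> la k <> 0) ->
  (i <= r)%nat -> cyclic_coeffs d la r i <> 0.
Proof.
  intros Hr Hnz Hi. destruct (Nat.eq_dec i r) as [->|Ne].
  - rewrite cyclic_coeffs_last. apply Rmult_integral_contrapositive.
    split; [apply neg1_pow_nonzero|apply Hnz; auto].
  - rewrite cyclic_coeffs_lt by lia. apply Hnz; lia.
Qed.

Lemma sign_changes_aux_map h a n :
  sign_changes_aux (map h (seq a (S n))) = changes h a n.
Proof.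
  revert a; induction n; intros a; [reflexivity|].
  change (sign_changes_aux (map h (seq a (S (S n)))))
    with (sign_change (h a) (h (S a)) + sign_changes_aux (map h (seq (S a) (S n))))%nat.
  rewrite IHn. reflexivity.
Qed.

Lemma sign_changes_cyclic d (la : nat -> R) r : (1 <= r)%nat ->
  (forall i, (i < r)%nat -> la i <> 0) ->
  sign_changes (map la (seq 0 r) ++ ((-1) ^ d * la 0%nat) :: nil)
  = changes (cyclic_coeffs d la r) 0 r.
Proof.
  intros Hr Hnz.
  assert (E : map la (seq 0 r) ++ ((-1) ^ d * la 0%nat) :: nil
              = map (cyclic_coeffs d la r) (seq 0 (S r))).
  { rewrite seq_S, map_app. simpl. rewrite cyclic_coeffs_last. f_equal.
    apply map_ext_in. intros i Hi. apply in_seq in Hi.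
    rewrite cyclic_coeffs_lt by lia. reflexivity. }
  unfold sign_changes. rewrite E, forallb_filter_id; [apply sign_changes_aux_map|].
  apply forallb_forall. intros x Hx. apply in_map_iff in Hx as [i [<- Hi]].
  apply in_seq in Hi. destruct (Req_EM_T (cyclic_coeffs d la r i) 0) as [E0|]; [|auto].
  exfalso. revert E0. apply cyclic_coeffs_nonzero; auto; lia.
Qed.

Lemma changes_split h a n m : changes h a (n + m) = (changes h a n + changes h (a + n) m)%nat.
Proof.
  revert a; induction n; intros a; simpl; [rewrite Nat.add_0_r; auto|].
  rewrite IHn. replace (S a + n)%nat with (a + S n)%nat by lia. lia.
Qed.

Lemma changes_one h a : changes h a 1 = sign_change (h a) (h (S a)).
Proof. simpl. lia. Qed.

Lemma changes_shift h a n : changes h (S a) n = changes (fun i => h (S i)) a n.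
Proof. revert a; induction n; intros a; simpl; auto. Qed.

Lemma changes_opp h a n : changes (fun i => - h i) a n = changes h a n.
Proof.
  revert a; induction n; intros a; simpl; auto. rewrite IHn. unfold sign_change.
  replace (- h a * - h (S a)) with (h a * h (S a)) by ring. reflexivity.
Qed.

Lemma same_sign_cases a a' : 0 < a * a' -> (0 < a /\ 0 < a') \/ (a < 0 /\ a' < 0).
Proof.
  intros H. destruct (Rlt_dec 0 a), (Rlt_dec 0 a'); [left; auto|right; nra..].
Qed.

Lemma sign_change_same_signs a b a' b' : 0 < a * a' -> 0 < b * b' ->
  sign_change a b = sign_change a' b'.
Proof.
  intros H1 H2. unfold sign_change.
  destruct (same_sign_cases _ _ H1) as [[? ?]|[? ?]], (same_sign_cases _ _ H2) as [[? ?]|[? ?]];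
  destruct (Rlt_dec (a * b) 0), (Rlt_dec (a' * b') 0); auto; exfalso; nra.
Qed.

Lemma changes_same_signs h g a n : (forall i, (a <= i <= a + n)%nat -> 0 < h i * g i) ->
  changes h a n = changes g a n.
Proof.
  revert a; induction n; intros a H; simpl; auto.
  rewrite (sign_change_same_signs (h a) (h (S a)) (g a) (g (S a))) by (apply H; lia).
  rewrite IHn; auto. intros; apply H; lia.
Qed.

Lemma changes_exists h a n : (1 <= changes h a n)%nat ->
  exists i, (a <= i < a + n)%nat /\ h i * h (S i) < 0.
Proof.
  revert a; induction n; intros a H; simpl in H; [lia|].
  unfold sign_change in H. destruct (Rlt_dec (h a * h (S a)) 0).
  - exists a. split; [lia|auto].
  - destruct (IHn (S a) ltac:(lia)) as [i [Hi Hh]]. exists i. split; [lia|auto].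
Qed.

Lemma changes_none h a n : changes h a n = 0%nat ->
  forall i, (a <= i < a + n)%nat -> 0 <= h i * h (S i).
Proof.
  revert a; induction n; intros a H i Hi; [lia|]. simpl in H.
  unfold sign_change in H. destruct (Rlt_dec (h a * h (S a)) 0); [lia|].
  destruct (Nat.eq_dec i a) as [->|]; [lra|]. apply (IHn (S a)); lia.
Qed.

(* Merging b away from a, b, c: replacing the window (a, b, c) by (a, -c)
   loses at least one sign change when a, b, c do not have a common sign. *)
Lemma sign_change_merge a b c : a <> 0 -> b <> 0 -> c <> 0 -> (a * b < 0 \/ b * c < 0) ->
  (sign_change a (- c) + 1 <= sign_change a b + sign_change b c)%nat.
Proof.
  intros Ha Hb Hc H. unfold sign_change.
  destruct (Rlt_dec (a * - c) 0), (Rlt_dec (a * b) 0), (Rlt_dec (b * c) 0);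
    try lia; exfalso; destruct H; nra.
Qed.

Definition good_index (h : nat -> R) (r k : nat) : Prop :=
  ((0 < k)%nat /\ (h (k - 1)%nat * h k < 0 \/ h k * h (S k) < 0)) \/
  (k = 0%nat /\ (h 0%nat * h 1%nat < 0 \/ h (r - 1)%nat * h r < 0)).

(* Dropping an interior term h k (0 < k < n) and flipping the signs of the
   later terms destroys at least one sign change when h k is adjacent to one. *)
Lemma changes_drop_interior (h h' : nat -> R) n k : (0 < k < n)%nat ->
  (forall i, (i <= n)%nat -> h i <> 0) ->
  (forall i, (i < k)%nat -> 0 < h' i * h i) ->
  (forall i, (k <= i <= n - 1)%nat -> 0 < h' i * - h (S i)) ->
  (h (k - 1)%nat * h k < 0 \/ h k * h (S k) < 0) ->
  (changes h' 0 (n - 1) + 1 <= changes h 0 n)%nat.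
Proof.
  intros Hk Hnz Hlo Hhi Hgood.
  replace (n - 1)%nat with ((k - 1) + 1 + (n - 1 - k))%nat by lia.
  replace n with ((k - 1) + 1 + 1 + (n - 1 - k))%nat at 2 by lia.
  rewrite !changes_split, !changes_one. simpl.
  replace (k - 1 + 1)%nat with k by lia. replace (S (k - 1)) with k by lia.
  replace (S k) with (k + 1)%nat by lia.
  assert (E1 : changes h' 0 (k - 1) = changes h 0 (k - 1))
    by (apply changes_same_signs; intros; apply Hlo; lia).
  assert (E2 : changes h' k (n - 1 - k) = changes h (k + 1) (n - 1 - k)).
  { replace (k + 1)%nat with (S k) by lia.
    rewrite changes_shift, <- (changes_opp (fun i => h (S i))).
    apply changes_same_signs. intros; apply Hhi; lia. }
  assert (E3 : sign_change (h' (k - 1)%nat) (h' k) = sign_change (h (k - 1)%nat) (- h (k + 1)%nat)).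
  { apply sign_change_same_signs; [apply Hlo; lia|].
    replace (k + 1)%nat with (S k) by lia. apply Hhi; lia. }
  rewrite E1, E2, E3.
  pose proof (sign_change_merge (h (k - 1)%nat) (h k) (h (k + 1)%nat)
               ltac:(apply Hnz; lia) ltac:(apply Hnz; lia) ltac:(apply Hnz; lia)
               ltac:(replace (k + 1)%nat with (S k) by lia; exact Hgood)).
  lia.
Qed.

(* Dropping the first term h 0 and flipping the signs of the others (the
   wrap-around term becoming c) destroys at least one sign change when h 0
   is adjacent to one, cyclically. *)
Lemma changes_drop_first (h h' : nat -> R) n c : (2 <= n)%nat ->
  (forall i, (i <= n)%nat -> h i <> 0) -> c <> 0 ->
  (forall i, (i < n - 1)%nat -> 0 < h' i * - h (S i)) ->
  0 < h' (n - 1)%nat * c ->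
  sign_change (h 0%nat) (h 1%nat) = sign_change (h n) c ->
  (h 0%nat * h 1%nat < 0 \/ h (n - 1)%nat * h n < 0) ->
  (changes h' 0 (n - 1) + 1 <= changes h 0 n)%nat.
Proof.
  intros Hn Hnz Hc Hsh Hlast Hwrap Hgood.
  replace (n - 1)%nat with ((n - 2) + 1)%nat by lia.
  replace n with (1 + (n - 2) + 1)%nat at 2 by lia.
  rewrite !changes_split, !changes_one. simpl.
  replace (S (n - 2)) with (n - 1)%nat by lia. replace (S (S (n - 2))) with n by lia.
  replace (S (n - 2 + 1)) with n by lia. replace (n - 2 + 1)%nat with (n - 1)%nat by lia.
  assert (E1 : changes h' 0 (n - 2) = changes h 1 (n - 2)).
  { rewrite changes_shift, <- (changes_opp (fun i => h (S i))). apply changes_same_signs.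
    intros; apply Hsh; lia. }
  assert (E2 : sign_change (h' (n - 2)%nat) (h' (n - 1)%nat) = sign_change (h (n - 1)%nat) (- c)).
  { replace (sign_change (h (n - 1)%nat) (- c)) with (sign_change (- h (n - 1)%nat) c)
      by (unfold sign_change; replace (- h (n - 1)%nat * c) with (h (n - 1)%nat * - c)
            by ring; reflexivity).
    apply sign_change_same_signs; [|exact Hlast].
    replace (h (n - 1)%nat) with (h (S (n - 2))) by (f_equal; lia). apply Hsh; lia. }
  rewrite E1, E2, Hwrap.
  assert (Hg : h (n - 1)%nat * h n < 0 \/ h n * c < 0).
  { destruct Hgood as [G|G]; [right|left; exact G].
    unfold sign_change in Hwrap.
    destruct (Rlt_dec (h 0%nat * h 1%nat) 0), (Rlt_dec (h n * c) 0); auto; lra || discriminate. }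
  pose proof (sign_change_merge (h (n - 1)%nat) (h n) c
               ltac:(apply Hnz; lia) ltac:(apply Hnz; lia) Hc Hg).
  replace (S (n - 1)) with n by lia. lia.
Qed.

(** * Sums of powers of linear forms *)

Definition power_sum (d : nat) (th la : nat -> R) (r : nat) (x y : R) : R :=
  sum_f_R0 (fun k => la k * (cos (th k) * x - sin (th k) * y) ^ d) (r - 1).

Definition lin_form (th : nat -> R) (k : nat) (P : R * R) : R :=
  cos (th k) * fst P - sin (th k) * snd P.

Lemma power_sum_form d th la r : is_form d (power_sum d th la r).
Proof.
  unfold power_sum. induction (r - 1)%nat as [|N IH]; simpl.
  - eapply is_form_ext;
      [|apply (is_form_scal d (la 0%nat) _ (is_form_pow_lin d (cos (th 0%nat)) (- sin (th 0%nat))))].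
    intros; simpl. do 2 f_equal. ring.
  - eapply is_form_ext; [|apply is_form_add; [apply IH|apply (is_form_scal d (la (S N)) _
      (is_form_pow_lin d (cos (th (S N))) (- sin (th (S N)))))]].
    intros; simpl. do 3 f_equal. ring.
Qed.

Lemma power_sum_origin d th la r : (1 <= d)%nat -> power_sum d th la r 0 0 = 0.
Proof.
  intros Hd. unfold power_sum. destruct d as [|d]; [lia|].
  induction (r - 1)%nat as [|N IH]; [simpl; ring|]. rewrite tech5, IH. simpl; ring.
Qed.

Lemma power_sum_degree0 th la r x y x' y' : power_sum 0 th la r x y = power_sum 0 th la r x' y'.
Proof. unfold power_sum. apply sum_eq. intros; simpl; ring. Qed.

Lemma sum_powers_deriv d N (th la : nat -> R) x y al be s :
  derivable_pt_lim
    (fun s => sum_f_R0 (fun k => la k * (cos (th k) * (x + s * al)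
                                          - sin (th k) * (y + s * be)) ^ d) N) s
    (sum_f_R0 (fun k => la k * (INR d * (cos (th k) * (x + s * al)
                                         - sin (th k) * (y + s * be)) ^ pred d
                                * (cos (th k) * al - sin (th k) * be))) N).
Proof.
  assert (Hterm : forall k, derivable_pt_lim
    (fun s => la k * (cos (th k) * (x + s * al) - sin (th k) * (y + s * be)) ^ d) s
    (la k * (INR d * (cos (th k) * (x + s * al) - sin (th k) * (y + s * be)) ^ pred d
             * (cos (th k) * al - sin (th k) * be)))).
  { intros k. apply (derivable_pt_lim_scal (fun s => _ ^ d)).
    apply (derivable_pt_lim_pow_comp (fun s => cos (th k) * (x + s * al) - sin (th k) * (y + s * be))).
    eapply derivable_pt_lim_ext; [|apply (derivable_pt_lim_affine (cos (th k) * x - sin (th k) * y))].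
    intros; simpl; ring. }
  induction N; simpl; [apply Hterm|].
  apply (derivable_pt_lim_plus (fun s => sum_f_R0 _ N)); [apply IHN|apply Hterm].
Qed.

Definition skip (k j : nat) : nat := if Nat.ltb j k then j else S j.

Lemma skip_ne k j : skip k j <> k.
Proof. unfold skip. destruct (Nat.ltb_spec j k); lia. Qed.

Lemma skip_lt k j : (j < k)%nat -> skip k j = j.
Proof. unfold skip. destruct (Nat.ltb_spec j k); lia. Qed.

Lemma skip_ge k j : (k <= j)%nat -> skip k j = S j.
Proof. unfold skip. destruct (Nat.ltb_spec j k); lia. Qed.

Lemma skip_bound k j r : (j < pred r)%nat -> (skip k j < r)%nat.
Proof. unfold skip. destruct (Nat.ltb_spec j k); lia. Qed.

Lemma sum_skip (f : nat -> R) N k : (k <= S N)%nat ->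
  sum_f_R0 f (S N) = f k + sum_f_R0 (fun j => f (skip k j)) N.
Proof.
  revert k; induction N; intros k Hk.
  - simpl. unfold skip. destruct k as [|[|k]]; simpl; try lia; ring.
  - rewrite tech5. destruct (Nat.eq_dec k (S (S N))) as [->|E].
    + rewrite Rplus_comm. f_equal. apply sum_eq. intros i Hi. rewrite skip_lt by lia. auto.
    + rewrite (IHN k), tech5, (skip_ge k (S N)) by lia. ring.
Qed.

(* Differentiating along (sin th_k, cos th_k) kills the k-th term and scales
   the j-th one by d sin (th_k - th_j). *)
Definition drop_theta (th : nat -> R) (k j : nat) : R := th (skip k j).

Definition drop_coeff (d : nat) (th la : nat -> R) (k j : nat) : R :=
  la (skip k j) * INR d * sin (th k - th (skip k j)).

Lemma power_sum_dir_deriv d th la r k : (2 <= r)%nat -> (k < r)%nat ->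
  dir_deriv (power_sum d th la r)
            (power_sum (pred d) (drop_theta th k) (drop_coeff d th la k) (pred r))
            (sin (th k)) (cos (th k)).
Proof.
  intros Hr Hk x y s. unfold power_sum.
  pose proof (sum_powers_deriv d (r - 1) th la x y (sin (th k)) (cos (th k)) s) as D.
  replace (sum_f_R0 _ (pred r - 1)) with (sum_f_R0 (fun j => la j * (INR d
      * (cos (th j) * (x + s * sin (th k)) - sin (th j) * (y + s * cos (th k))) ^ pred d
      * (cos (th j) * sin (th k) - sin (th j) * cos (th k)))) (r - 1)); [exact D|].
  replace (r - 1)%nat with (S (pred r - 1)) by lia.
  rewrite (sum_skip _ _ k) by lia.
  replace (cos (th k) * sin (th k) - sin (th k) * cos (th k)) with 0 by ring.
  rewrite Rmult_0_r, Rmult_0_r, Rplus_0_l.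
  apply sum_eq. intros i Hi. unfold drop_coeff, drop_theta. rewrite sin_minus. ring.
Qed.

Lemma sum_pos (f : nat -> R) N : (forall i, (i <= N)%nat -> 0 <= f i) ->
  (exists i, (i <= N)%nat /\ 0 < f i) -> 0 < sum_f_R0 f N.
Proof.
  induction N; intros H [i [Hi Hp]].
  - simpl. replace i with 0%nat in Hp by lia. exact Hp.
  - rewrite tech5. assert (0 <= f (S N)) by (apply H; lia).
    destruct (Nat.eq_dec i (S N)) as [->|Ne].
    + assert (0 <= sum_f_R0 f N).
      { rewrite <- (Rmult_0_l (INR (S N))), <- sum_cte. apply sum_Rle. intros; apply H; lia. }
      lra.
    + assert (0 < sum_f_R0 f N) by
        (apply IHN; [intros; apply H; lia|exists i; split; [lia|auto]]).
      lra.
Qed.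

Lemma even_pow_pos d x : (-1) ^ d = 1 -> 0 <= x ^ d /\ (x <> 0 -> 0 < x ^ d).
Proof.
  intros Hd. destruct (Nat.Even_or_Odd d) as [[m ->]|[m ->]].
  - rewrite pow_mult. split; [apply pow_le; nra|intros; apply pow_lt; nra].
  - exfalso. replace (2 * m + 1)%nat with (S (2 * m)) in Hd by lia.
    rewrite pow_1_odd in Hd. lra.
Qed.

Section Angles.

Variables (th : nat -> R) (r : nat).
Hypothesis th_range : forall k, (k < r)%nat -> - (PI / 2) < th k <= PI / 2.
Hypothesis th_incr : forall k, (S k < r)%nat -> th k < th (S k).

Lemma theta_lt i j : (i < j)%nat -> (j < r)%nat -> th i < th j.
Proof.
  intros Hij. induction Hij as [|m Hij IH]; intros Hr; [apply th_incr; auto|].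
  apply Rlt_trans with (th m); [apply IH; lia|apply th_incr; lia].
Qed.

Lemma sin_theta_diff_pos i j : (i < j)%nat -> (j < r)%nat -> 0 < sin (th j - th i).
Proof.
  intros Hij Hj. pose proof (theta_lt i j Hij Hj).
  pose proof (th_range i ltac:(lia)). pose proof (th_range j Hj).
  apply sin_gt_0; lra.
Qed.

Lemma lin_forms_independent i j p1 p2 : (i < j)%nat -> (j < r)%nat ->
  cos (th i) * p1 - sin (th i) * p2 = 0 -> cos (th j) * p1 - sin (th j) * p2 = 0 ->
  p1 = 0 /\ p2 = 0.
Proof.
  intros Hij Hj H1 H2.
  pose proof (sin_theta_diff_pos i j Hij Hj) as S. rewrite sin_minus in S.
  set (D := sin (th j) * cos (th i) - cos (th j) * sin (th i)) in S.
  split; apply (Rmult_eq_reg_l D); try lra.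
  - replace (D * p1) with (sin (th j) * (cos (th i) * p1 - sin (th i) * p2)
                           - sin (th i) * (cos (th j) * p1 - sin (th j) * p2)) by (unfold D; ring).
    rewrite H1, H2; ring.
  - replace (D * p2) with (cos (th j) * (cos (th i) * p1 - sin (th i) * p2)
                           - cos (th i) * (cos (th j) * p1 - sin (th j) * p2)) by (unfold D; ring).
    rewrite H1, H2; ring.
Qed.

Lemma drop_theta_range k j : (j < pred r)%nat ->
  - (PI / 2) < drop_theta th k j <= PI / 2.
Proof. intros Hj. apply th_range, skip_bound, Hj. Qed.

Lemma drop_theta_incr k j : (S j < pred r)%nat -> drop_theta th k j < drop_theta th k (S j).
Proof.
  intros Hj. apply theta_lt; unfold skip;
    destruct (Nat.ltb_spec j k), (Nat.ltb_spec (S j) k); lia.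
Qed.

Lemma drop_coeff_sign d la k j : (1 <= d)%nat -> (k < r)%nat -> (j < pred r)%nat ->
  la (skip k j) <> 0 ->
  ((skip k j < k)%nat -> 0 < drop_coeff d th la k j * la (skip k j)) /\
  ((k < skip k j)%nat -> drop_coeff d th la k j * la (skip k j) < 0).
Proof.
  intros Hd Hk Hj Hla. unfold drop_coeff.
  assert (Hs : (skip k j < r)%nat) by (apply skip_bound, Hj).
  assert (0 < INR d) by (apply lt_0_INR; lia).
  assert (0 < la (skip k j) * la (skip k j)) by nra.
  split; intros L.
  - pose proof (sin_theta_diff_pos _ _ L Hk).
    replace (la (skip k j) * INR d * sin (th k - th (skip k j)) * la (skip k j))
      with ((la (skip k j) * la (skip k j)) * (INR d * sin (th k - th (skip k j)))) by ring.
    apply Rmult_lt_0_compat; [|apply Rmult_lt_0_compat]; auto.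
  - pose proof (sin_theta_diff_pos _ _ L Hs).
    replace (la (skip k j) * INR d * sin (th k - th (skip k j)) * la (skip k j))
      with (- ((la (skip k j) * la (skip k j)) * (INR d * sin (th (skip k j) - th k))))
      by (replace (th k - th (skip k j)) with (- (th (skip k j) - th k)) by ring;
          rewrite sin_neg; ring).
    apply Ropp_lt_gt_0_contravar, Rmult_lt_0_compat; [|apply Rmult_lt_0_compat]; auto.
Qed.

Lemma drop_coeff_nonzero d la k j : (1 <= d)%nat -> (k < r)%nat -> (j < pred r)%nat ->
  la (skip k j) <> 0 -> drop_coeff d th la k j <> 0.
Proof.
  intros Hd Hk Hj Hla E. destruct (drop_coeff_sign d la k j Hd Hk Hj Hla) as [H1 H2].
  rewrite E, Rmult_0_l in H1, H2. pose proof (skip_ne k j).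
  destruct (Nat.lt_total (skip k j) k) as [L|[L|L]]; [specialize (H1 L)|contradiction|specialize (H2 L)]; lra.
Qed.

Lemma no_sign_change_signs d la : (2 <= r)%nat -> (forall i, (i < r)%nat -> la i <> 0) ->
  changes (cyclic_coeffs d la r) 0 r = 0%nat ->
  (-1) ^ d = 1 /\ forall i, (i < r)%nat -> 0 < la i * la 0%nat.
Proof.
  intros Hr Hnz Hc. pose proof (changes_none _ 0 r Hc) as Z.
  assert (Hl0 : la 0%nat <> 0) by (apply Hnz; lia).
  assert (Hsame : forall i, (i < r)%nat -> 0 < la i * la 0%nat).
  { induction i as [|i IH]; intros Hi; [nra|].
    specialize (IH ltac:(lia)). specialize (Z i ltac:(lia)).
    rewrite !cyclic_coeffs_lt in Z by lia.
    assert (Hne : la i * la (S i) <> 0)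
      by (apply Rmult_integral_contrapositive; split; apply Hnz; lia).
    assert (Hi' : 0 < la i * la (S i)) by lra.
    destruct (same_sign_cases _ _ Hi') as [[? ?]|[? ?]]; nra. }
  split; [|exact Hsame].
  specialize (Z (r - 1)%nat ltac:(lia)). replace (S (r - 1)) with r in Z by lia.
  rewrite cyclic_coeffs_last, cyclic_coeffs_lt in Z by lia.
  pose proof (Hsame (r - 1)%nat ltac:(lia)).
  destruct (neg1_pow_cases d) as [E|E]; [exact E|rewrite E in Z; nra].
Qed.

Lemma power_sum_definite d la : (2 <= r)%nat -> (forall i, (i < r)%nat -> la i <> 0) ->
  changes (cyclic_coeffs d la r) 0 r = 0%nat ->
  forall P, nonzero_pt P -> power_sum d th la r (fst P) (snd P) <> 0.
Proof.
  intros Hr Hnz Hc P HP E.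
  destruct (no_sign_change_signs d la Hr Hnz Hc) as [Hd Hsame].
  assert (Hpos : 0 < la 0%nat * power_sum d th la r (fst P) (snd P)).
  { unfold power_sum. rewrite scal_sum. apply sum_pos.
    - intros i Hi. pose proof (Hsame i ltac:(lia)).
      destruct (even_pow_pos d (lin_form th i P) Hd) as [G _]. unfold lin_form in G. nra.
    - destruct (Req_dec (lin_form th 0 P) 0) as [E0|E0]; [exists 1%nat|exists 0%nat];
        (split; [lia|]).
      + assert (E1 : lin_form th 1 P <> 0).
        { intros E1. destruct (lin_forms_independent 0 1 _ _ ltac:(lia) ltac:(lia) E0 E1).
          destruct HP; auto. }
        pose proof (Hsame 1%nat ltac:(lia)).
        destruct (even_pow_pos d (lin_form th 1 P) Hd) as [_ G]. specialize (G E1). unfold lin_form in G. nra.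
      + pose proof (Hsame 0%nat ltac:(lia)).
        destruct (even_pow_pos d (lin_form th 0 P) Hd) as [_ G]. specialize (G E0).
        unfold lin_form in G. nra. }
  rewrite E in Hpos. lra.
Qed.

Section SignChanges.

Variables (d : nat) (la : nat -> R).
Hypothesis r_ge3 : (3 <= r)%nat.
Hypothesis d_pos : (1 <= d)%nat.
Hypothesis la_nonzero : forall i, (i < r)%nat -> la i <> 0.

Lemma drop_coeff_sign_at k j : (k < r)%nat -> (j < pred r)%nat ->
  ((skip k j < k)%nat -> 0 < drop_coeff d th la k j * la (skip k j)) /\
  ((k < skip k j)%nat -> drop_coeff d th la k j * la (skip k j) < 0).
Proof.
  intros Hk Hj. apply drop_coeff_sign; auto.
  apply la_nonzero, skip_bound, Hj.
Qed.

Lemma loses_sign_change_first :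
  good_index (cyclic_coeffs d la r) r 0 ->
  (changes (cyclic_coeffs (pred d) (drop_coeff d th la 0) (pred r)) 0 (pred r) + 1
   <= changes (cyclic_coeffs d la r) 0 r)%nat.
Proof.
  intros Hgood.
  assert (Hsg : forall j, (j < pred r)%nat -> drop_coeff d th la 0 j * la (S j) < 0).
  { intros j Hj. destruct (drop_coeff_sign_at 0 j ltac:(lia) Hj) as [_ H2].
    rewrite skip_ge in H2 by lia. apply H2; lia. }
  rewrite <- (Nat.sub_1_r r).
  apply (changes_drop_first _ _ r ((-1) ^ d * la 1%nat)); [lia| | | | | |].
  - intros; apply cyclic_coeffs_nonzero; auto; lia.
  - apply Rmult_integral_contrapositive. split; [apply neg1_pow_nonzero|apply la_nonzero; lia].
  - intros i Hi. rewrite !cyclic_coeffs_lt by lia. specialize (Hsg i ltac:(lia)). lra.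
  - rewrite cyclic_coeffs_last. specialize (Hsg 0%nat ltac:(lia)).
    replace ((-1) ^ pred d * drop_coeff d th la 0 0 * ((-1) ^ d * la 1%nat))
      with ((-1) ^ pred d * (-1) ^ d * (drop_coeff d th la 0 0 * la 1%nat)) by ring.
    rewrite neg1_pow_pred by auto. lra.
  - rewrite !cyclic_coeffs_lt, cyclic_coeffs_last by lia. unfold sign_change.
    replace ((-1) ^ d * la 0%nat * ((-1) ^ d * la 1%nat))
      with ((-1) ^ d * (-1) ^ d * (la 0%nat * la 1%nat)) by ring.
    rewrite neg1_pow_sq, Rmult_1_l. reflexivity.
  - destruct Hgood as [[Hc _]|[_ G]]; [lia|exact G].
Qed.

Lemma loses_sign_change_interior k : (0 < k < r)%nat ->
  good_index (cyclic_coeffs d la r) r k ->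
  (changes (cyclic_coeffs (pred d) (drop_coeff d th la k) (pred r)) 0 (pred r) + 1
   <= changes (cyclic_coeffs d la r) 0 r)%nat.
Proof.
  intros Hk Hgood.
  assert (Hlo : forall j, (j < k)%nat -> 0 < drop_coeff d th la k j * la j).
  { intros j Hj. destruct (drop_coeff_sign_at k j ltac:(lia) ltac:(lia)) as [H1 _].
    rewrite skip_lt in H1 by lia. apply H1; lia. }
  assert (Hhi : forall j, (k <= j < pred r)%nat -> drop_coeff d th la k j * la (S j) < 0).
  { intros j Hj. destruct (drop_coeff_sign_at k j ltac:(lia) ltac:(lia)) as [_ H2].
    rewrite skip_ge in H2 by lia. apply H2; lia. }
  rewrite <- (Nat.sub_1_r r).
  apply (changes_drop_interior _ _ r k); [lia| | | |].
  - intros; apply cyclic_coeffs_nonzero; auto; lia.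
  - intros i Hi. rewrite !cyclic_coeffs_lt by lia. apply Hlo; lia.
  - intros i Hi. destruct (Nat.eq_dec i (r - 1)) as [->|Ne].
    + replace (S (r - 1)) with r by lia. rewrite !cyclic_coeffs_last.
      specialize (Hlo 0%nat ltac:(lia)).
      replace ((-1) ^ pred d * drop_coeff d th la k 0 * - ((-1) ^ d * la 0%nat))
        with (- ((-1) ^ pred d * (-1) ^ d) * (drop_coeff d th la k 0 * la 0%nat)) by ring.
      rewrite neg1_pow_pred by auto. lra.
    + rewrite !cyclic_coeffs_lt by lia. specialize (Hhi i ltac:(lia)). lra.
  - destruct Hgood as [[_ G]|[Hc _]]; [exact G|lia].
Qed.

Lemma derivative_loses_sign_change k : (k < r)%nat ->
  good_index (cyclic_coeffs d la r) r k ->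
  (changes (cyclic_coeffs (pred d) (drop_coeff d th la k) (pred r)) 0 (pred r) + 1
   <= changes (cyclic_coeffs d la r) 0 r)%nat.
Proof.
  intros Hk Hgood. destruct (Nat.eq_dec k 0) as [->|Hk0].
  - apply loses_sign_change_first, Hgood.
  - apply loses_sign_change_interior; [lia|exact Hgood].
Qed.

End SignChanges.

End Angles.

(** * The base case: two terms *)

Lemma pow_eq_zero_inv x n : x ^ n = 0 -> x = 0.
Proof. intros H. destruct (Req_dec x 0) as [|Hx]; auto. exfalso. apply (pow_nonzero x n Hx H). Qed.

Lemma pow_lt_compat_nonneg a b n : 0 <= a < b -> (1 <= n)%nat -> a ^ n < b ^ n.
Proof.
  intros [H1 H2] Hn. induction n as [|n IH]; [lia|]. destruct n as [|n]; [simpl; lra|].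
  assert (a ^ S n < b ^ S n) by (apply IH; lia).
  assert (0 <= a ^ S n) by (apply pow_le; auto).
  simpl in *. nra.
Qed.

Lemma pow_eq_cases x y n : (1 <= n)%nat -> x ^ n = y ^ n -> x = y \/ x = - y.
Proof.
  intros Hn E. assert (E2 : Rabs x ^ n = Rabs y ^ n) by (rewrite !RPow_abs, E; auto).
  assert (Habs : Rabs x = Rabs y).
  { destruct (Rtotal_order (Rabs x) (Rabs y)) as [L|[L|L]]; auto; exfalso.
    - pose proof (pow_lt_compat_nonneg (Rabs x) (Rabs y) n (conj (Rabs_pos _) L) Hn). lra.
    - pose proof (pow_lt_compat_nonneg (Rabs y) (Rabs x) n (conj (Rabs_pos _) L) Hn). lra. }
  revert Habs. unfold Rabs. destruct (Rcase_abs x), (Rcase_abs y); intros; lra.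
Qed.

Lemma pow_level_set_small (l : list R) n c : (1 <= n)%nat -> NoDup l ->
  (forall x, In x l -> x ^ n = c) ->
  (length l <= 2)%nat /\ ((-1) ^ n = -1 -> (length l <= 1)%nat).
Proof.
  intros Hn Hnd Hc.
  assert (Hpm : forall x y, In x l -> In y l -> x = y \/ x = - y).
  { intros x y Hx Hy. apply (pow_eq_cases x y n Hn). rewrite !Hc; auto. }
  split.
  - destruct l as [|x [|y [|z l]]]; simpl; try lia. exfalso.
    rewrite !NoDup_cons_iff in Hnd. simpl in Hnd.
    assert (x <> y /\ x <> z /\ y <> z) as (Nxy & Nxz & Nyz) by intuition (subst; auto).
    destruct (Hpm x y), (Hpm x z), (Hpm y z); simpl; auto; lra.
  - intros Hodd. destruct l as [|x [|y l]]; simpl; try lia. exfalso.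
    rewrite !NoDup_cons_iff in Hnd. simpl in Hnd.
    assert (Nxy : x <> y) by intuition (subst; auto).
    destruct (Hpm x y ltac:(simpl; auto) ltac:(simpl; auto)) as [E|E]; [contradiction|].
    assert (Ey := Hc y ltac:(simpl; auto)). rewrite <- (Hc x ltac:(simpl; auto)), E in Ey.
    replace (- y) with (-1 * y) in Ey by ring. rewrite Rpow_mult_distr, Hodd in Ey.
    assert (Hy0 : y ^ n = 0) by lra. apply (pow_nonzero y n); [|exact Hy0].
    intros ->. apply Nxy. rewrite E. ring.
Qed.

Section TwoTerms.

Variables (d : nat) (th la : nat -> R).
Hypothesis d_pos : (1 <= d)%nat.
Hypothesis th_range : forall k, (k < 2)%nat -> - (PI / 2) < th k <= PI / 2.
Hypothesis th_incr : forall k, (S k < 2)%nat -> th k < th (S k).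
Hypothesis la0_nonzero : la 0%nat <> 0.
Hypothesis la1_nonzero : la 1%nat <> 0.

Lemma two_terms_value P : power_sum d th la 2 (fst P) (snd P)
  = la 0%nat * lin_form th 0 P ^ d + la 1%nat * lin_form th 1 P ^ d.
Proof. reflexivity. Qed.

Lemma two_terms_zero_forms P : nonzero_pt P -> power_sum d th la 2 (fst P) (snd P) = 0 ->
  lin_form th 0 P <> 0 /\ lin_form th 1 P <> 0.
Proof.
  intros HP Hz. rewrite two_terms_value in Hz.
  assert (Hind : ~ (lin_form th 0 P = 0 /\ lin_form th 1 P = 0)).
  { intros [A B]. destruct (lin_forms_independent th 2 th_range th_incr 0 1 _ _
                             ltac:(lia) ltac:(lia) A B).
    destruct HP; auto. }
  assert (H0d : 0 ^ d = 0) by (apply pow_ne_zero; lia).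
  split; intros E; apply Hind; split; auto; rewrite E, H0d in Hz.
  - apply (pow_eq_zero_inv _ d). apply (Rmult_eq_reg_l (la 1%nat)); [lra|auto].
  - apply (pow_eq_zero_inv _ d). apply (Rmult_eq_reg_l (la 0%nat)); [lra|auto].
Qed.

(* Zeros are simple: the derivative killing the second term is a nonzero
   multiple of a power of the first linear form. *)
Lemma two_terms_simple P : nonzero_pt P -> power_sum d th la 2 (fst P) (snd P) = 0 ->
  ~ vanishes_to (power_sum d th la 2) P 2.
Proof.
  intros HP Hz H2.
  pose proof (vanishes_to_dir_deriv _ _ _ _ P 1
                (power_sum_dir_deriv d th la 2 1 ltac:(lia) ltac:(lia)) H2) as H1.
  apply vanishes_to_zero in H1; [|lia].
  unfold power_sum in H1. simpl in H1.
  apply Rmult_integral in H1 as [H1|H1].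
  - revert H1. apply (drop_coeff_nonzero th 2 th_range th_incr); auto; simpl; lia.
  - apply (proj1 (two_terms_zero_forms P HP Hz)), (pow_eq_zero_inv _ (pred d)).
    unfold lin_form, drop_theta in *. rewrite skip_lt in H1 by lia. exact H1.
Qed.

(* The ratio of the two linear forms is a complete invariant of the zeros. *)
Definition form_ratio (P : R * R) : R := lin_form th 0 P / lin_form th 1 P.

Lemma form_ratio_pow P : nonzero_pt P -> power_sum d th la 2 (fst P) (snd P) = 0 ->
  form_ratio P ^ d = - la 1%nat / la 0%nat.
Proof.
  intros HP Hz. destruct (two_terms_zero_forms P HP Hz) as [_ H1].
  rewrite two_terms_value in Hz. unfold form_ratio, Rdiv.
  rewrite Rpow_mult_distr, pow_inv.
  assert (Hp : lin_form th 1 P ^ d <> 0) by (apply pow_nonzero; auto).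
  replace (lin_form th 0 P ^ d) with (- la 1%nat * lin_form th 1 P ^ d * / la 0%nat).
  - field. auto.
  - apply (Rmult_eq_reg_l (la 0%nat)); [|auto]. field_simplify; [lra|auto].
Qed.

Lemma form_ratio_iff P Q : nonzero_pt P -> nonzero_pt Q ->
  power_sum d th la 2 (fst P) (snd P) = 0 -> power_sum d th la 2 (fst Q) (snd Q) = 0 ->
  (proportional P Q <-> form_ratio P = form_ratio Q).
Proof.
  intros HP HQ ZP ZQ.
  destruct (two_terms_zero_forms P HP ZP) as [_ P1], (two_terms_zero_forms Q HQ ZQ) as [_ Q1].
  pose proof (sin_theta_diff_pos th 2 th_range th_incr 0 1 ltac:(lia) ltac:(lia)) as Hsin.
  assert (Hdet : (fst P * snd Q - snd P * fst Q) * sin (th 1%nat - th 0%nat)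
                 = - (lin_form th 0 P * lin_form th 1 Q - lin_form th 0 Q * lin_form th 1 P))
    by (unfold lin_form; rewrite sin_minus; ring).
  unfold proportional, form_ratio. split; intros E.
  - rewrite E, Rmult_0_l in Hdet. field_simplify_eq; [lra|auto].
  - replace (lin_form th 0 P * lin_form th 1 Q - lin_form th 0 Q * lin_form th 1 P)
      with ((lin_form th 0 P / lin_form th 1 P - lin_form th 0 Q / lin_form th 1 Q)
            * (lin_form th 1 P * lin_form th 1 Q)) in Hdet by (field; auto).
    rewrite E, Rminus_diag, Rmult_0_l, Ropp_0 in Hdet.
    apply Rmult_integral in Hdet as [H|H]; [exact H|lra].
Qed.

Lemma two_terms_changes : changes (cyclic_coeffs d la 2) 0 2
  = (sign_change (la 0%nat) (la 1%nat) + sign_change (la 1%nat) ((-1) ^ d * la 0%nat))%nat.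
Proof.
  simpl. rewrite !cyclic_coeffs_lt, cyclic_coeffs_last by lia. lia.
Qed.

Lemma two_terms_bound pts : zero_list (power_sum d th la 2) pts ->
  (1 <= changes (cyclic_coeffs d la 2) 0 2)%nat ->
  (mult_sum pts <= changes (cyclic_coeffs d la 2) 0 2)%nat.
Proof.
  intros HZ Hsig.
  set (Z := filter positive_mult pts).
  assert (HZ' : zero_list (power_sum d th la 2) Z) by (apply zero_list_filter; auto).
  assert (Hsimple : forall q, In q Z ->
            power_sum d th la 2 (fst (fst q)) (snd (fst q)) = 0 /\ snd q = 1%nat).
  { intros q Hq. destruct (proj2 HZ' q Hq) as [Hn Hv].
    apply filter_In in Hq as [_ Hq]. unfold positive_mult in Hq. apply Nat.ltb_lt in Hq.
    assert (Hz : power_sum d th la 2 (fst (fst q)) (snd (fst q)) = 0)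
      by (apply (vanishes_to_zero _ _ (snd q)); auto).
    split; [exact Hz|]. destruct (Nat.eq_dec (snd q) 1) as [|Ne]; [auto|exfalso].
    apply (two_terms_simple (fst q) Hn Hz), (vanishes_to_le _ _ (snd q)); auto. lia. }
  rewrite <- mult_sum_filter_positive. fold Z.
  rewrite mult_sum_ones by (intros; apply Hsimple; auto).
  assert (Hnd : NoDup (map (fun q => form_ratio (fst q)) Z)).
  { apply (distinct_pts_iff_key form_ratio Z); [|apply HZ'].
    intros q q' Hq Hq'. apply form_ratio_iff; try apply HZ'; try apply Hsimple; auto. }
  destruct (pow_level_set_small _ d (- la 1%nat / la 0%nat) d_pos Hnd) as [Hle2 Hle1].
  { intros x Hx. apply in_map_iff in Hx as [q [<- Hq]].
    apply form_ratio_pow; [apply HZ'|apply Hsimple]; auto. }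
  rewrite length_map in Hle2, Hle1. rewrite two_terms_changes in *.
  unfold sign_change in *.
  destruct (neg1_pow_cases d) as [E|E]; rewrite E in *.
  - rewrite Rmult_1_l, (Rmult_comm (la 1%nat)) in *.
    destruct (Rlt_dec (la 0%nat * la 1%nat) 0); lia.
  - specialize (Hle1 eq_refl).
    destruct (Rlt_dec (la 0%nat * la 1%nat) 0), (Rlt_dec (la 1%nat * (-1 * la 0%nat)) 0);
      try lia; exfalso; nra.
Qed.

End TwoTerms.

(* Of two different derivatives killing a term, one is not identically zero
   (otherwise the form would be constant, hence zero). *)
Lemma some_derivative_nonzero d th la r k1 k2 : (2 <= r)%nat -> (1 <= d)%nat ->
  (forall k, (k < r)%nat -> - (PI / 2) < th k <= PI / 2) ->
  (forall k, (S k < r)%nat -> th k < th (S k)) ->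
  (k1 < r)%nat -> (k2 < r)%nat -> k1 <> k2 ->
  (exists x y, power_sum d th la r x y <> 0) ->
  exists k, (k = k1 \/ k = k2) /\
    exists x y, power_sum (pred d) (drop_theta th k) (drop_coeff d th la k) (pred r) x y <> 0.
Proof.
  intros Hr Hd Hrg Hs Hk1 Hk2 Hne [x0 [y0 Hxy]].
  set (G := fun k => power_sum (pred d) (drop_theta th k) (drop_coeff d th la k) (pred r)).
  destruct (classic (exists x y, G k1 x y <> 0)) as [E1|E1]; [exists k1; auto|].
  destruct (classic (exists x y, G k2 x y <> 0)) as [E2|E2]; [exists k2; auto|].
  exfalso. apply Hxy.
  assert (Z : forall k, ~ (exists x y, G k x y <> 0) -> forall x y, G k x y = 0).
  { intros k E x y. destruct (Req_dec (G k x y) 0); auto. exfalso; eauto. }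
  apply (zero_of_two_dir_derivs _ (G k1) (G k2) (sin (th k1)) (cos (th k1))
           (sin (th k2)) (cos (th k2))); auto using power_sum_origin;
    [unfold G; apply power_sum_dir_deriv; auto..|].
  replace (sin (th k1) * cos (th k2) - cos (th k1) * sin (th k2)) with (sin (th k1 - th k2))
    by (rewrite sin_minus; ring).
  destruct (Nat.lt_total k1 k2) as [L|[L|L]]; [|contradiction|].
  - pose proof (sin_theta_diff_pos th r Hrg Hs k1 k2 L Hk2).
    replace (th k1 - th k2) with (- (th k2 - th k1)) by ring. rewrite sin_neg. lra.
  - pose proof (sin_theta_diff_pos th r Hrg Hs k2 k1 L Hk1). lra.
Qed.

Lemma good_direction d th la r : (3 <= r)%nat -> (1 <= d)%nat ->
  (forall k, (k < r)%nat -> - (PI / 2) < th k <= PI / 2) ->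
  (forall k, (S k < r)%nat -> th k < th (S k)) ->
  (1 <= changes (cyclic_coeffs d la r) 0 r)%nat ->
  (exists x y, power_sum d th la r x y <> 0) ->
  exists k, (k < r)%nat /\ good_index (cyclic_coeffs d la r) r k /\
    exists x y, power_sum (pred d) (drop_theta th k) (drop_coeff d th la k) (pred r) x y <> 0.
Proof.
  intros Hr Hd Hrg Hs Hc Hne.
  destruct (changes_exists _ 0 r Hc) as [j [Hj Hhj]].
  set (k2 := if Nat.ltb (S j) r then S j else 0%nat).
  assert (Hk2 : (k2 < r /\ k2 <> j)%nat)
    by (unfold k2; destruct (Nat.ltb_spec (S j) r); lia).
  assert (G1 : good_index (cyclic_coeffs d la r) r j).
  { unfold good_index. destruct (Nat.eq_dec j 0) as [->|E].
    - right. split; [reflexivity|left; exact Hhj].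
    - left. split; [lia|right; exact Hhj]. }
  assert (G2 : good_index (cyclic_coeffs d la r) r k2).
  { unfold good_index, k2. destruct (Nat.ltb_spec (S j) r).
    - left. split; [lia|left]. replace (S j - 1)%nat with j by lia. exact Hhj.
    - right. split; [reflexivity|right]. replace (r - 1)%nat with j by lia.
      replace (S j) with r in Hhj by lia. exact Hhj. }
  destruct (some_derivative_nonzero d th la r j k2 ltac:(lia) Hd Hrg Hs ltac:(lia)
              (proj1 Hk2) (not_eq_sym (proj2 Hk2)) Hne) as [k [[Ek|Ek] Hk]];
    subst k; [exists j|exists k2]; repeat split; try lia; auto.
Qed.

Theorem zeros_le_sign_changes : forall r, (2 <= r)%nat -> forall d th la pts,
  (forall k, (k < r)%nat -> - (PI / 2) < th k <= PI / 2) ->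
  (forall k, (S k < r)%nat -> th k < th (S k)) ->
  (forall k, (k < r)%nat -> la k <> 0) ->
  (exists x y, power_sum d th la r x y <> 0) ->
  zero_list (power_sum d th la r) pts ->
  (mult_sum pts <= changes (cyclic_coeffs d la r) 0 r)%nat.
Proof.
  induction r as [|r IH]; intros Hr d th la pts Hrg Hs Hnz [x0 [y0 Hne]] Hz; [lia|].
  destruct d as [|d'].
  { rewrite (mult_sum_no_zeros (power_sum 0 th la (S r)) pts); [lia| |auto].
    intros P _. rewrite (power_sum_degree0 _ _ _ _ _ x0 y0). auto. }
  set (d := S d') in *. assert (Hd : (1 <= d)%nat) by (unfold d; lia).
  destruct (Nat.eq_dec (changes (cyclic_coeffs d la (S r)) 0 (S r)) 0) as [Hc0|Hc0].
  { rewrite (mult_sum_no_zeros (power_sum d th la (S r)) pts); [lia| |auto].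
    apply (power_sum_definite th (S r) Hrg Hs d la); auto; lia. }
  destruct (Nat.eq_dec r 1) as [->|Hr1].
  { apply (two_terms_bound d th la Hd Hrg Hs (Hnz 0%nat ltac:(lia)) (Hnz 1%nat ltac:(lia)));
      [exact Hz|lia]. }
  destruct (good_direction d th la (S r) ltac:(lia) Hd Hrg Hs ltac:(lia) ltac:(eauto))
    as [k [Hk [Hgood Hne']]].
  assert (Hunit : sin (th k) * sin (th k) + cos (th k) * cos (th k) = 1)
    by (pose proof (sin2_cos2 (th k)) as S2; unfold Rsqr in S2; lra).
  destruct (rolle_step _ _ _ _ _ Hunit (power_sum_dir_deriv d th la (S r) k ltac:(lia) Hk)
              (power_sum_form _ _ _ _) pts Hz) as [pts' [Hz' Hle]].
  assert (Hr2 : (2 <= r)%nat) by lia.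
  assert (IH' := IH Hr2 (pred d) (drop_theta th k) (drop_coeff d th la k) pts'
                 (drop_theta_range th (S r) Hrg k) (drop_theta_incr th (S r) Hs k)
                 (fun j Hj => drop_coeff_nonzero th (S r) Hrg Hs d la k j Hd Hk Hj
                                (Hnz _ (skip_bound k j (S r) Hj)))
                 Hne' Hz').
  pose proof (derivative_loses_sign_change th (S r) Hrg Hs d la ltac:(lia) Hd Hnz k Hk Hgood).
  simpl pred in *. lia.
Qed.

(** * From real linear factors to zeros with multiplicities *)

Lemma lin_forms_proportional u v u' v' P : (u <> 0 \/ v <> 0) -> nonzero_pt P ->
  u * fst P + v * snd P = 0 -> u' * fst P + v' * snd P = 0 ->
  exists c, forall x y, u' * x + v' * y = c * (u * x + v * y).
Proof.
  intros Huv HP H1 H2.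
  assert (E1 : (u * v' - v * u') * fst P = 0).
  { replace ((u * v' - v * u') * fst P)
      with (v' * (u * fst P + v * snd P) - v * (u' * fst P + v' * snd P)) by ring.
    rewrite H1, H2; ring. }
  assert (E2 : (u * v' - v * u') * snd P = 0).
  { replace ((u * v' - v * u') * snd P)
      with (u * (u' * fst P + v' * snd P) - u' * (u * fst P + v * snd P)) by ring.
    rewrite H1, H2; ring. }
  assert (D : u * v' - v * u' = 0).
  { destruct HP as [HP|HP];
      [apply Rmult_integral in E1 as [E|E]|apply Rmult_integral in E2 as [E|E]]; tauto. }
  destruct Huv as [Hu|Hv].
  - exists (u' / u). intros x y. apply (Rmult_eq_reg_l u); [|auto]. field_simplify; [|auto].
    replace (u * v' * y) with ((u * v' - v * u') * y + v * u' * y) by ring. rewrite D. ring.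
  - exists (v' / v). intros x y. apply (Rmult_eq_reg_l v); [|auto]. field_simplify; [|auto].
    replace (v * u' * x) with (- (u * v' - v * u') * x + u * v' * x) by ring. rewrite D. ring.
Qed.

Lemma vanishes_to_mul_lin F u v P e : vanishes_to F P e ->
  vanishes_to (fun x y => (u * x + v * y) * F x y) P e.
Proof.
  intros [u0 [v0 [Huv [Hl [k [Q [HQ E]]]]]]].
  exists u0, v0. split; [auto|split; [auto|]].
  exists (S k), (fun x y => (u * x + v * y) * Q x y). split; [apply is_form_mul_lin; auto|].
  intros; rewrite E; ring.
Qed.

Lemma vanishes_to_mul_lin_at F u v P e : (u <> 0 \/ v <> 0) -> nonzero_pt P ->
  u * fst P + v * snd P = 0 -> vanishes_to F P e ->
  vanishes_to (fun x y => (u * x + v * y) * F x y) P (S e).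
Proof.
  intros Huv HP Hl [u0 [v0 [Huv0 [Hl0 [k [Q [HQ E]]]]]]].
  destruct (lin_forms_proportional u v u0 v0 P Huv HP Hl Hl0) as [c Hc].
  exists u, v. split; [auto|split; [auto|]].
  exists k, (fun x y => c ^ e * Q x y). split; [apply is_form_scal; auto|].
  intros x y. rewrite E, Hc, Rpow_mult_distr. simpl. ring.
Qed.

Lemma common_zero_proportional u v P Q : (u <> 0 \/ v <> 0) ->
  u * fst P + v * snd P = 0 -> u * fst Q + v * snd Q = 0 -> proportional P Q.
Proof.
  intros Huv HP HQ. unfold proportional.
  destruct Huv as [Hu|Hv]; [apply (Rmult_eq_reg_l u)|apply (Rmult_eq_reg_l v)]; auto.
  - replace (u * (fst P * snd Q - snd P * fst Q))
      with ((u * fst P + v * snd P) * snd Q - snd P * (u * fst Q + v * snd Q)) by ring.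
    rewrite HP, HQ. ring.
  - replace (v * (fst P * snd Q - snd P * fst Q))
      with (fst P * (u * fst Q + v * snd Q) - (u * fst P + v * snd P) * fst Q) by ring.
    rewrite HP, HQ. ring.
Qed.

Definition on_line (u v : R) (q : R * R * nat) : bool :=
  if Req_EM_T (u * fst (fst q) + v * snd (fst q)) 0 then true else false.

Lemma on_line_at_most_one u v l : (u <> 0 \/ v <> 0) -> distinct_pts l ->
  (length (filter (on_line u v) l) <= 1)%nat.
Proof.
  intros Huv Hd. pose proof (distinct_pts_filter (on_line u v) l Hd) as Hd'.
  assert (Hon : forall q, In q (filter (on_line u v) l) -> u * fst (fst q) + v * snd (fst q) = 0).
  { intros q Hq. apply filter_In in Hq as [_ Hq]. unfold on_line in Hq.
    destruct (Req_EM_T _ 0); [auto|discriminate]. }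
  destruct (filter (on_line u v) l) as [|q [|q' l']]; simpl; [lia|lia|exfalso].
  inversion Hd' as [|? ? Hf _]; subst. inversion Hf as [|? ? Hqq' _]; subst.
  apply Hqq', (common_zero_proportional u v); [exact Huv|apply Hon; simpl; auto..].
Qed.

Definition bump_on_line (u v : R) (q : R * R * nat) : R * R * nat :=
  (fst q, if on_line u v q then S (snd q) else snd q).

Lemma mult_sum_bump u v l :
  mult_sum (map (bump_on_line u v) l) = (mult_sum l + length (filter (on_line u v) l))%nat.
Proof.
  unfold mult_sum. induction l as [|q l IH]; simpl; auto.
  rewrite IH. change (snd (bump_on_line u v q)) with (if on_line u v q then S (snd q) else snd q).
  destruct (on_line u v q); simpl; lia.
Qed.

Lemma distinct_pts_map_fst (f : R * R * nat -> R * R * nat) l :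
  (forall q, fst (f q) = fst q) -> distinct_pts l -> distinct_pts (map f l).
Proof.
  intros Hf. induction 1 as [|q l Hq Hd IH]; simpl; constructor; [|exact IH].
  rewrite Forall_forall in *. intros q' Hq'. apply in_map_iff in Hq' as [p [<- Hp]].
  rewrite !Hf. apply Hq, Hp.
Qed.

Lemma zero_list_mul_lin n F u v pts : is_form n F -> (u <> 0 \/ v <> 0) -> zero_list F pts ->
  exists pts', zero_list (fun x y => (u * x + v * y) * F x y) pts' /\
               mult_sum pts' = S (mult_sum pts).
Proof.
  intros HF Huv [Hd Hv].
  pose proof (on_line_at_most_one u v pts Huv Hd) as Hle.
  destruct (filter (on_line u v) pts) as [|q0 l0] eqn:EA.
  - exists (((- v, u), 1%nat) :: pts). split; [split|reflexivity].
    + constructor; [|exact Hd]. apply Forall_forall. intros q Hq Hp. simpl in Hp.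
      assert (Hz : u * fst (fst q) + v * snd (fst q) = 0)
        by (apply (lin_vanish_proportional u v (- v, u)); simpl; auto;
            [ring|unfold nonzero_pt; simpl; destruct Huv; [right|left]; lra]).
      assert (Hin : In q (filter (on_line u v) pts)).
      { apply filter_In. split; [auto|]. unfold on_line. destruct (Req_EM_T _ 0); tauto. }
      rewrite EA in Hin. contradiction.
    + intros q [<-|Hq]; simpl.
      * split; [unfold nonzero_pt; simpl; destruct Huv; [right|left]; lra|].
        exists u, v. split; [auto|split; [simpl; ring|]].
        exists n, F. split; [auto|]. intros; simpl; ring.
      * destruct (Hv q Hq). split; [auto|apply vanishes_to_mul_lin; auto].
  - exists (map (bump_on_line u v) pts). split; [split|].
    + apply distinct_pts_map_fst; auto.
    + intros q Hq. apply in_map_iff in Hq as [p [<- Hp]]. destruct (Hv p Hp) as [Hn Ho].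
      split; [exact Hn|]. unfold bump_on_line, on_line. simpl.
      destruct (Req_EM_T _ 0); [apply vanishes_to_mul_lin_at|apply vanishes_to_mul_lin]; auto.
    + rewrite mult_sum_bump, EA. simpl in *. lia.
Qed.

Lemma is_form_prod_lin m u v n Q : is_form n Q ->
  is_form (m + n) (fun x y => prod_lin m u v x y * Q x y).
Proof.
  intros HQ. induction m as [|m IH]; simpl.
  - eapply is_form_ext; [|exact HQ]. intros x y; simpl; ring.
  - eapply is_form_ext; [|apply (is_form_mul_lin _ (u m) (v m) _ IH)]. intros x y; simpl; ring.
Qed.

Lemma prod_lin_zero_list m u v n Q : (forall i, (i < m)%nat -> u i <> 0 \/ v i <> 0) ->
  is_form n Q ->
  exists pts, zero_list (fun x y => prod_lin m u v x y * Q x y) pts /\ mult_sum pts = m.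
Proof.
  intros Huv HQ. induction m as [|m IH].
  - exists nil. split; [split; [constructor|intros q []]|reflexivity].
  - destruct IH as [pts [Hz Hm]]; [intros; apply Huv; lia|].
    destruct (zero_list_mul_lin _ _ (u m) (v m) pts (is_form_prod_lin m u v n Q HQ)
                (Huv m ltac:(lia)) Hz) as [pts' [Hz' Hm']].
    exists pts'. split; [|lia].
    eapply zero_list_ext; [|exact Hz']. intros; simpl; ring.
Qed.

(* A binary form vanishing everywhere has zero coefficients: peel off the
   top coefficient at (1, 0), then use continuity across the line y = 0. *)
Lemma binform_vanishing_coeffs d a : (forall x y, binform d a x y = 0) ->
  forall i, (i <= d)%nat -> a i = 0.
Proof.
  revert a; induction d as [|d IH]; intros a H i Hi.
  - replace i with 0%nat by lia. rewrite <- (binform_0 a 0 0). auto.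
  - assert (Htop : a (S d) = 0).
    { pose proof (H 1 0) as E. rewrite binform_S, pow1, Rmult_0_l, Rplus_0_r in E. lra. }
    destruct (Nat.eq_dec i (S d)) as [->|Ne]; [exact Htop|].
    apply IH; [|lia]. intros x y.
    assert (Hoff : forall y', y' <> 0 -> binform d a x y' = 0).
    { intros y' Hy'. pose proof (H x y') as E. rewrite binform_S, Htop in E.
      assert (E' : y' * binform d a x y' = 0) by lra.
      apply Rmult_integral in E' as [E'|E']; [contradiction|exact E']. }
    destruct (Req_dec y 0) as [->|Hy]; [|auto].
    destruct (is_form_dir_deriv d (binform d a) 0 1 ltac:(exists a; auto)) as [G [_ [_ D]]].
    change (binform d a x 0) with ((fun s => binform d a x s) 0).
    apply (zero_at_from_punctured _ 0 (G x 0)); [|intros s Hs; apply Hoff, Hs].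
    eapply derivable_pt_lim_ext; [|apply (dir_deriv_at0 _ _ _ _ D x 0)].
    intros s; simpl. f_equal; ring.
Qed.

Lemma binform_nonzero_point d a : binform_nonzero d a -> exists x y, binform d a x y <> 0.
Proof.
  intros [i [Hi Ha]]. apply NNPP. intros N. apply Ha.
  apply (binform_vanishing_coeffs d a); auto. intros x y.
  destruct (Req_dec (binform d a x y) 0); auto. exfalso; apply N; eauto.
Qed.

(* Indices k = 1..r of the paper are shifted to 0..r-1. *)
Theorem corollary2p5 (d : nat) (a : nat -> R) (tau r : nat)
  (theta lambda : nat -> R) :
  (1 <= d)%nat ->
  binform_nonzero d a ->
  num_real_linear_factors d a tau ->
  (2 <= r)%nat ->
  (forall k, (k < r)%nat -> - (PI / 2) < theta k <= PI / 2) ->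
  (forall k, (S k < r)%nat -> theta k < theta (S k)) ->
  (forall k, (k < r)%nat -> lambda k <> 0) ->
  (forall x y, binform d a x y =
     sum_f_R0 (fun k => lambda k * (cos (theta k) * x - sin (theta k) * y) ^ d)
              (r - 1)) ->
  (tau <= sign_changes (map lambda (seq 0%nat r) ++ ((((-1) ^ d * lambda 0%nat)%R) :: nil)))%nat.
Proof.
  intros Hd Hnz [[_ [u [v [b [Huv Hfac]]]]] _] Hr Hrg Hs Hla Hrep.
  destruct (prod_lin_zero_list tau u v (d - tau) (binform (d - tau) b) Huv
              ltac:(exists b; auto)) as [pts [Hz Hm]].
  rewrite sign_changes_cyclic, <- Hm by (auto; lia).
  apply (zeros_le_sign_changes r Hr d theta lambda pts Hrg Hs Hla).
  - destruct (binform_nonzero_point d a Hnz) as [x [y Hxy]].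
    exists x, y. unfold power_sum. rewrite <- Hrep. exact Hxy.
  - eapply zero_list_ext; [|exact Hz]. intros x y. simpl. rewrite <- Hfac. apply Hrep.
Qed.
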